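(* Let ${}_{\mathfrak Y}\mathfrak B_{\mathfrak X}$ be a left-fibrant graph of bisets and ${}_{\mathfrak X}\mathfrak C_{\mathfrak W}$ a graph of bisets, and let $\dagger\in\mathfrak Y$, $*\in\mathfrak X$, $\ddagger\in\mathfrak W$ be vertices. Then the biset morphism \[\pi_1(\mathfrak B\otimes_{\mathfrak X}\mathfrak C,\dagger,\ddagger)\to\pi_1(\mathfrak B,\dagger,* )\otimes_{\pi_1(\mathfrak X,* )}\pi_1(\mathfrak C,*,\ddagger),\qquad q(b\otimes c)r\mapsto(qbp)\otimes(p^{-1}cr)\] (for $(v,w)$ a vertex of $\mathfrak B\otimes_{\mathfrak X}\mathfrak C$, $b\otimes c\in B_v\otimes B_w$, $q\in\pi_1(\mathfrak Y,\dagger,\lambda(v))$, $r\in\pi_1(\mathfrak W,\rho(w),\ddagger)$, and any $p\in\pi_1(\mathfrak X,\rho(v),* )$) is an isomorphism.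
   Context: Graphs and graphs of groups. A graph is a set $V\sqcup E$ with maps $x\mapsto x^-\in V$, $x\mapsto\bar x$, $\bar{\bar x}=x$, $x=x^-\iff x=\bar x\iff x\in V$; $x^+=(\bar x)^-$. Graph morphisms commute with these (may send edges to vertices); simplicial ones send edges to edges. A graph of groups is a connected graph with groups $G_x$ and homomorphisms $g\mapsto g^-\colon G_x\to G_{x^-}$, $g\mapsto\bar g\colon G_x\to G_{\bar x}$ ($G_x\to G_{\bar x}\to G_x$ identity, both identity for vertices), $g^+=(\bar g)^-$. Its fundamental groupoid $\pi_1(\mathfrak X)$ has objects $V$, generated by the $x\in\mathfrak X$ (from $x^-$ to $x^+$) and the elements of the $G_v$, subject to the relations of the $G_v$, $v=1\in G_v$, $x\bar x=1$, $g^-x=xg^+$; $\pi_1(\mathfrak X,v,w)$ = morphisms from $v$ to $w$. Graphs of bisets. A $\mathfrak Y$-$\mathfrak X$ graph of bisets: graph $\mathfrak B$, graph morphisms $\lambda\colon\mathfrak B\to\mathfrak Y$, $\rho\colon\mathfrak B\to\mathfrak X$, $G_{\lambda(z)}$-$G_{\rho(z)}$-bisets $B_z$ and congruences $b\mapsto b^-\colon B_z\to B_{z^-}$, $b\mapsto\bar b\colon B_z\to B_{\bar z}$ w.r.t. the group homomorphisms (same axioms), $b^+=(\bar b)^-$. Fundamental biset $\pi_1(\mathfrak B,\dagger,* )$: $\bigsqcup_{z\in V(\mathfrak B)}\pi_1(\mathfrak Y,\dagger,\lambda(z))\otimes_{G_{\lambda(z)}}B_z\otimes_{G_{\rho(z)}}\pi_1(\mathfrak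 X,\rho(z),* )$ modulo $q\otimes b^-\otimes p=q\lambda(z)\otimes b^+\otimes\overline{\rho(z)}p$ for edges $z\in\mathfrak B$ ($\lambda(z),\overline{\rho(z)}$ groupoid morphisms, trivial if vertices); it is a $\pi_1(\mathfrak Y,\dagger)$-$\pi_1(\mathfrak X,* )$-biset. Product: for a $\mathfrak Y$-$\mathfrak X$ graph of bisets $\mathfrak B$ and an $\mathfrak X$-$\mathfrak W$ graph of bisets $\mathfrak C$, $\mathfrak B\otimes_{\mathfrak X}\mathfrak C$ has underlying graph $\{(b,c)\in\mathfrak B\times\mathfrak C\mid\rho(b)=\lambda(c)\}$ with $(b,c)^-=(b^-,c^-)$, $\overline{(b,c)}=(\bar b,\bar c)$, $\lambda(b,c)=\lambda(b)$, $\rho(b,c)=\rho(c)$, and biset $B_b\otimes_{G_{\rho(b)}}C_c$ at $(b,c)$. Left-fibrant: $\rho$ simplicial and for every vertex $v\in\mathfrak B$ and edge $f\in\mathfrak X$ with $f^-=\rho(v)$, the map $\bigsqcup_{e\in\rho^{-1}(f),\,e^-=v}G_{\lambda(v)}\otimes_{G_{\lambda(e)}}B_e\to B_v$, $g\otimes b\mapsto gb^-$, is an isomorphism of $G_{\lambda(v)}$-$G_f$-bisets. *)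

(* Quotients are represented as setoids: a type of representatives with an
   equivalence relation generated by the defining relations. *)
From Stdlib Require Import List Relations ProofIrrelevance.
Import ListNotations.

Set Implicit Arguments.
Unset Strict Implicit.

Record group := Group {
  gcar :> Type;
  gmul : gcar -> gcar -> gcar;
  gone : gcar;
  ginv : gcar -> gcar;
  gmulA : forall x y z, gmul x (gmul y z) = gmul (gmul x y) z;
  gmul1 : forall x, gmul gone x = x;
  gmulV : forall x, gmul (ginv x) x = gone }.
Arguments gmul {g}. Arguments gone {g}. Arguments ginv {g}.

Definition is_hom (G H : group) (f : G -> H) : Prop :=
  forall x y, f (gmul x y) = gmul (f x) (f y).

Definition tr (A : Type) (F : A -> Type) (x y : A) (e : x = y) (a : F x) : F y :=
  eq_rect x F a y e.
Arguments tr {A} F {x y} e a.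

(* Graphs: a set with x |-> x^- and x |-> bar x;
   vertices are the fixed points, x^- is a vertex, bar is an involution,
   x = x^- <-> x = bar x.                                              *)
Record graph := Graph {
  gpt :> Type;
  gm : gpt -> gpt;
  gb : gpt -> gpt;
  gbK : forall x, gb (gb x) = x;
  gmV : forall x, gm (gm x) = gm x;
  gm_gb : forall x, gm x = x <-> gb x = x }.
Arguments gm {g}. Arguments gb {g}.

Definition gp (X : graph) (x : X) : X := gm (gb x).

Definition connected (X : graph) : Prop :=
  forall x y : X, clos_refl_sym_trans X (fun a b => b = gm a \/ b = gb a) x y.

Record gmorph (X Y : graph) := GMorph {
  gmap :> X -> Y;
  gmap_m : forall x, gmap (gm x) = gm (gmap x);
  gmap_b : forall x, gmap (gb x) = gb (gmap x) }.

Definition simplicial (X Y : graph) (f : gmorph X Y) : Prop :=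
  forall x : X, gm x <> x -> gm (f x) <> f x.

Record gog := GoG {
  gog_graph :> graph;
  Gr : gog_graph -> group;
  resm : forall x, Gr x -> Gr (gm x);
  resb : forall x, Gr x -> Gr (gb x) }.

Definition GrT (X : gog) (x : X) : Type := gcar (Gr x).

Definition gog_valid (X : gog) : Prop :=
  connected X /\
  (forall x, is_hom (@resm X x)) /\
  (forall x, is_hom (@resb X x)) /\
  (forall x (g : Gr x), tr (@GrT X) (gbK x) (resb (resb g)) = g) /\
  (forall v (e : gm v = v) (g : Gr v), tr (@GrT X) e (resm g) = g) /\
  (forall v (e : gb v = v) (g : Gr v), tr (@GrT X) e (resb g) = g).

(* Fundamental groupoid: words in the generators, typed, modulo the
   congruence generated by the defining relations.                    *)
Inductive letter (X : gog) : Type :=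
| LX (x : X)                 (* the generator x, from x^- to x^+ *)
| LG (v : X) (g : Gr v).
Arguments LX {X}. Arguments LG {X}.

Fixpoint wpath (X : gog) (v w : X) (s : list (letter X)) : Prop :=
  match s with
  | [] => v = w
  | LX x :: s' => gm x = v /\ wpath (gp x) w s'
  | LG u _ :: s' => gm u = u /\ u = v /\ wpath u w s'
  end.

Inductive prel (X : gog) : list (letter X) -> list (letter X) -> Prop :=
| pr_mul (v : X) (g h : Gr v) : prel [LG v g; LG v h] [LG v (gmul g h)]
| pr_one (v : X) : prel [LG v gone] []
| pr_vert (v : X) : gm v = v -> prel [LX v] []
| pr_inv (x : X) : prel [LX x; LX (gb x)] []
| pr_conj (x : X) (g : Gr x) :
    prel [LG (gm x) (resm g); LX x] [LX x; LG (gm (gb x)) (resm (resb g))].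

Definition wstep (X : gog) (s t : list (letter X)) : Prop :=
  exists l r a b, prel a b /\ s = l ++ a ++ r /\ t = l ++ b ++ r.

(* equality of morphisms in pi_1(X, v, w) *)
Definition weq (X : gog) (v w : X) : relation (list (letter X)) :=
  clos_refl_sym_trans _ (fun s t => wpath v w s /\ wpath v w t /\ wstep s t).

Definition linv (X : gog) (a : letter X) : letter X :=
  match a with LX x => LX (gb x) | LG v g => LG v (ginv g) end.
Definition winv (X : gog) (s : list (letter X)) : list (letter X) :=
  rev (map (@linv X) s).

(* Bisets (as setoids; the graphs of bisets in the theorem are required
   to have Leibniz equality, see leibniz_gob)                          *)
Record biset (G H : group) := Biset {
  bcar :> Type;
  beq : bcar -> bcar -> Prop;
  lact : G -> bcar -> bcar;
  ract : bcar -> H -> bcar }.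
Arguments beq {G H b}. Arguments lact {G H b}. Arguments ract {G H b}.

Definition biset_valid (G H : group) (B : biset G H) : Prop :=
  equivalence _ (@beq _ _ B) /\
  (forall g (x y : B), beq x y -> beq (lact g x) (lact g y)) /\
  (forall h (x y : B), beq x y -> beq (ract x h) (ract y h)) /\
  (forall x : B, beq (lact gone x) x) /\
  (forall g g' (x : B), beq (lact g (lact g' x)) (lact (gmul g g') x)) /\
  (forall x : B, beq (ract x gone) x) /\
  (forall h h' (x : B), beq (ract (ract x h) h') (ract x (gmul h h'))) /\
  (forall g h (x : B), beq (lact g (ract x h)) (ract (lact g x) h)).

(* B (x)_H C, where the right group H of B is identified with the left
   group H' of C through phi (a transport along an equality) *)
Definition tensor_rel (G H H' K : group) (B : biset G H) (C : biset H' K)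
  (phi : H -> H') (x y : B * C) : Prop :=
  (beq (fst x) (fst y) /\ snd x = snd y) \/
  (fst x = fst y /\ beq (snd x) (snd y)) \/
  (exists b h c, x = (ract b h, c) /\ y = (b, lact (phi h) c)).

Definition tensor (G H H' K : group) (B : biset G H) (C : biset H' K)
  (phi : H -> H') : biset G K :=
  @Biset G K (B * C) (clos_refl_sym_trans _ (tensor_rel phi))
    (fun g x => (lact g (fst x), snd x)) (fun x k => (fst x, ract (snd x) k)).

Record gob (Y X : gog) := GoB {
  gob_graph :> graph;
  lam : gmorph gob_graph Y;
  rho : gmorph gob_graph X;
  Bs : forall z : gob_graph, biset (Gr (lam z)) (Gr (rho z));
  bm : forall z, Bs z -> Bs (gm z);
  bb : forall z, Bs z -> Bs (gb z) }.
Arguments lam {Y X g}. Arguments rho {Y X g}. Arguments Bs {Y X g}.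
Arguments bm {Y X g z}. Arguments bb {Y X g z}.

Definition BsT (Y X : gog) (B : gob Y X) (z : B) : Type := bcar (Bs z).

Definition gob_valid (Y X : gog) (B : gob Y X) : Prop :=
  (forall z : B, biset_valid (Bs z)) /\
  (forall (z : B) (x y : Bs z), beq x y -> beq (bm x) (bm y)) /\
  (forall (z : B) (x y : Bs z), beq x y -> beq (bb x) (bb y)) /\
  (forall (z : B) g (x : Bs z) h,
     beq (bm (lact g (ract x h)))
         (lact (tr (@GrT Y) (eq_sym (gmap_m lam z)) (resm g))
               (ract (bm x) (tr (@GrT X) (eq_sym (gmap_m rho z)) (resm h))))) /\
  (forall (z : B) g (x : Bs z) h,
     beq (bb (lact g (ract x h)))
         (lact (tr (@GrT Y) (eq_sym (gmap_b lam z)) (resb g))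
               (ract (bb x) (tr (@GrT X) (eq_sym (gmap_b rho z)) (resb h))))) /\
  (forall (z : B) (x : Bs z), beq (tr (@BsT Y X B) (gbK z) (bb (bb x))) x) /\
  (forall (z : B) (e : gm z = z) (x : Bs z), beq (tr (@BsT Y X B) e (bm x)) x) /\
  (forall (z : B) (e : gb z = z) (x : Bs z), beq (tr (@BsT Y X B) e (bb x)) x).

Definition leibniz_gob (Y X : gog) (B : gob Y X) : Prop :=
  forall (z : B) (x y : Bs z), beq x y <-> x = y.

(* Fundamental biset pi_1(B, dag, star)                               *)
Record fbrep (Y X : gog) (B : gob Y X) := FBRep {
  rz : B;
  rq : list (letter Y);
  rb : Bs rz;
  rp : list (letter X) }.
Arguments FBRep {Y X B}.

Definition fb_typ (Y X : gog) (B : gob Y X) (dag : Y) (star : X)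
  (r : fbrep B) : Prop :=
  gm (rz r) = rz r /\ wpath dag (lam (rz r)) (rq r) /\ wpath (rho (rz r)) star (rp r).

Inductive fb_rel (Y X : gog) (B : gob Y X) (dag : Y) (star : X) :
    fbrep B -> fbrep B -> Prop :=
| fbr_q (z : B) q q' (b : Bs z) p :
    weq dag (lam z) q q' -> fb_rel dag star (FBRep z q b p) (FBRep z q' b p)
| fbr_p (z : B) q (b : Bs z) p p' :
    weq (rho z) star p p' -> fb_rel dag star (FBRep z q b p) (FBRep z q b p')
| fbr_b (z : B) q (b b' : Bs z) p :
    beq b b' -> fb_rel dag star (FBRep z q b p) (FBRep z q b' p)
| fbr_l (z : B) q g (b : Bs z) p :
    fb_rel dag star (FBRep z (q ++ [LG (lam z) g]) b p) (FBRep z q (lact g b) p)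
| fbr_r (z : B) q (b : Bs z) h p :
    fb_rel dag star (FBRep z q (ract b h) p) (FBRep z q b (LG (rho z) h :: p))
| fbr_e (z : B) q (b : Bs z) p :
    gm z <> z ->
    fb_rel dag star (FBRep (gm z) q (bm b) p)
      (FBRep (gm (gb z)) (q ++ [LX (lam z)]) (bm (bb b)) (LX (gb (rho z)) :: p)).

Definition fbeq (Y X : gog) (B : gob Y X) (dag : Y) (star : X) : relation (fbrep B) :=
  clos_refl_sym_trans _
    (fun r s => fb_typ dag star r /\ fb_typ dag star s /\ fb_rel dag star r s).

Definition fb_lact (Y X : gog) (B : gob Y X) (q : list (letter Y)) (r : fbrep B) :=
  FBRep (rz r) (q ++ rq r) (rb r) (rp r).
Definition fb_ract (Y X : gog) (B : gob Y X) (r : fbrep B) (p : list (letter X)) :=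
  FBRep (rz r) (rq r) (rb r) (rp r ++ p).

(* pi_1(B, dag, star) (x)_{pi_1(X, star)} pi_1(C, star, ddag)          *)
Section FTensor.
Variables (Y X W : gog) (B : gob Y X) (C : gob X W) (dag : Y) (star : X) (ddag : W).

Definition ft_typ (t : fbrep B * fbrep C) : Prop :=
  fb_typ dag star (fst t) /\ fb_typ star ddag (snd t).

Inductive ft_rel : fbrep B * fbrep C -> fbrep B * fbrep C -> Prop :=
| ftr_1 r r' s : fbeq dag star r r' -> ft_rel (r, s) (r', s)
| ftr_2 r s s' : fbeq star ddag s s' -> ft_rel (r, s) (r, s')
| ftr_m r s p : wpath star star p -> ft_rel (fb_ract r p, s) (r, fb_lact p s).

Definition fteq : relation (fbrep B * fbrep C) :=
  clos_refl_sym_trans _ (fun t u => ft_typ t /\ ft_typ u /\ ft_rel t u).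
End FTensor.

Lemma sig_eq (A : Type) (P : A -> Prop) (x y : sig P) :
  proj1_sig x = proj1_sig y -> x = y.
Proof.
  destruct x as [x hx], y as [y hy]; simpl; intros ->.
  f_equal; apply proof_irrelevance.
Qed.

Section Product.
Variables (Y X W : gog) (B : gob Y X) (C : gob X W).

Definition pcar : Type := { bc : B * C | rho (fst bc) = lam (snd bc) }.

Definition pgm (p : pcar) : pcar :=
  let b := fst (proj1_sig p) in let c := snd (proj1_sig p) in
  exist _ (gm b, gm c)
    (eq_trans (gmap_m rho b)
       (eq_trans (f_equal gm (proj2_sig p)) (eq_sym (gmap_m lam c)))).

Definition pgb (p : pcar) : pcar :=
  let b := fst (proj1_sig p) in let c := snd (proj1_sig p) in
  exist _ (gb b, gb c)
    (eq_trans (gmap_b rho b)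
       (eq_trans (f_equal gb (proj2_sig p)) (eq_sym (gmap_b lam c)))).

Lemma pgbK (p : pcar) : pgb (pgb p) = p.
Proof.
  apply sig_eq; destruct p as [[b c] h]; simpl; rewrite !gbK; reflexivity.
Qed.

Lemma pgmV (p : pcar) : pgm (pgm p) = pgm p.
Proof.
  apply sig_eq; destruct p as [[b c] h]; simpl; rewrite !gmV; reflexivity.
Qed.

Lemma pgm_gb (p : pcar) : pgm p = p <-> pgb p = p.
Proof.
  destruct p as [[b c] h]; split; intro H;
    apply (f_equal (@proj1_sig _ _)) in H; simpl in H; injection H as H1 H2;
    apply sig_eq; simpl.
  - apply gm_gb in H1; apply gm_gb in H2; rewrite H1, H2; reflexivity.
  - apply gm_gb in H1; apply gm_gb in H2; rewrite H1, H2; reflexivity.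
Qed.

Definition pgraph : graph := @Graph pcar pgm pgb pgbK pgmV pgm_gb.

Definition plam : gmorph pgraph Y :=
  @GMorph pgraph Y (fun p : pcar => lam (fst (proj1_sig p)))
    (fun p => gmap_m lam (fst (proj1_sig p)))
    (fun p => gmap_b lam (fst (proj1_sig p))).

Definition prho : gmorph pgraph W :=
  @GMorph pgraph W (fun p : pcar => rho (snd (proj1_sig p)))
    (fun p => gmap_m rho (snd (proj1_sig p)))
    (fun p => gmap_b rho (snd (proj1_sig p))).

Definition pBs (p : pgraph) : biset (Gr (plam p)) (Gr (prho p)) :=
  tensor (Bs (fst (proj1_sig p))) (Bs (snd (proj1_sig p)))
    (tr (@GrT X) (proj2_sig p)).

Definition pbm (p : pgraph) (x : pBs p) : pBs (gm p) :=
  (bm (fst x), bm (snd x)).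
Definition pbb (p : pgraph) (x : pBs p) : pBs (gb p) :=
  (bb (fst x), bb (snd x)).

Definition gob_prod : gob Y W := @GoB Y W pgraph plam prho pBs pbm pbb.
End Product.

Definition pvert (Y X W : gog) (B : gob Y X) (C : gob X W) (v : B) (w : C)
  (h : rho v = lam w) : gob_prod B C := exist _ (v, w) h.

Definition prep (Y X W : gog) (B : gob Y X) (C : gob X W) (v : B) (w : C)
  (h : rho v = lam w) (q : list (letter Y)) (b : Bs v) (c : Bs w)
  (r : list (letter W)) : fbrep (gob_prod B C) :=
  @FBRep Y W (gob_prod B C) (pvert h) q (b, c) r.

Section Fibrant.
Variables (Y X : gog) (B : gob Y X).

(* elements g (x) b of  G_{lam v} (x)_{G_{lam e}} B_e, e in rho^-1(f), e^- = v *)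
Record fibel (v : B) (f : X) := FibEl {
  fe : B; fe_rho : rho fe = f; fe_src : gm fe = v;
  fg : Gr (lam v); fb : Bs fe }.
Arguments FibEl {v f}.

Definition fib_phi (v : B) (e : B) (hs : gm e = v) (h : Gr (lam e)) : Gr (lam v) :=
  tr (@GrT Y) (eq_trans (eq_sym (gmap_m lam e)) (f_equal lam hs)) (resm h).

Inductive fib_rel (v : B) (f : X) : fibel v f -> fibel v f -> Prop :=
| fibr_t e hr hs g h (b : Bs e) :
    fib_rel (FibEl e hr hs (gmul g (fib_phi hs h)) b) (FibEl e hr hs g (lact h b))
| fibr_b e hr hs g (b b' : Bs e) :
    beq b b' -> fib_rel (FibEl e hr hs g b) (FibEl e hr hs g b').

Definition fibmap (v : B) (f : X) (x : fibel v f) : Bs v :=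
  lact (fg x) (tr (@BsT Y X B) (fe_src x) (bm (fb x))).

Definition fib_lact (v : B) (f : X) (g : Gr (lam v)) (x : fibel v f) : fibel v f :=
  FibEl (fe x) (fe_rho x) (fe_src x) (gmul g (fg x)) (fb x).
Definition fib_ract (v : B) (f : X) (x : fibel v f) (h : Gr f) : fibel v f :=
  FibEl (fe x) (fe_rho x) (fe_src x) (fg x)
    (ract (fb x) (tr (@GrT X) (eq_sym (fe_rho x)) h)).

Definition left_fibrant : Prop :=
  simplicial (@rho Y X B) /\
  forall (v : B) (hv : gm v = v) (f : X) (hfv : gm f = rho v) (hfe : gm f <> f),
    (forall (g : Gr (lam v)) (x : fibel v f), beq (fibmap (fib_lact g x)) (lact g (fibmap x))) /\
    (forall x h, beq (fibmap (fib_ract x h))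
                     (ract (fibmap x) (tr (@GrT X) hfv (resm h)))) /\
    (forall x y : fibel v f, beq (fibmap x) (fibmap y) ->
        clos_refl_sym_trans _ (@fib_rel v f) x y) /\
    (forall y : Bs v, exists x : fibel v f, beq (fibmap x) y).
End Fibrant.

(* The map sends [q (b (x) c) r] to [(q b p) (x) (p^-1 c r)] for a chosen path [p] from [rho v]
   to [*]; the choice is immaterial because [(b p) (x) (p' c)] only depends on the class of [p p']
   in [pi_1(X)].  For the inverse, the middle path [p p'] of [(q b p) (x) (p' c r)] is pushed
   through [B] letter by letter: group elements act on [b], and at an edge [f] of [X],
   left-fibrancy writes [b] as [g e^- b'] with [e] an edge of [B] over [f], uniquely up to the
   tensor relations, so that [q b f = q g lam(e) b'^+].  This normal form turns every element of the tensor product into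
   one coming from a vertex of [B (x)_X C], and it is compatible with all defining relations
   on both sides, which yields injectivity as well as surjectivity. *)

From Stdlib Require Import List Relations ProofIrrelevance ClassicalEpsilon.
Import ListNotations.
Set Implicit Arguments.
Unset Strict Implicit.

Lemma tr_irr (A : Type) (F : A -> Type) (x y : A) (e1 e2 : x = y) (a : F x) :
  tr F e1 a = tr F e2 a.
Proof. now rewrite (proof_irrelevance _ e1 e2). Qed.

Lemma tr_id (A : Type) (F : A -> Type) (x : A) (e : x = x) (a : F x) : tr F e a = a.
Proof. now rewrite (proof_irrelevance _ e eq_refl). Qed.

Lemma tr_trans (A : Type) (F : A -> Type) (x y z : A) (e1 : x = y) (e2 : y = z) (a : F x) :
  tr F e2 (tr F e1 a) = tr F (eq_trans e1 e2) a.
Proof. now destruct e1, e2. Qed.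

Lemma tr_sym (A : Type) (F : A -> Type) (x y : A) (e : x = y) (a : F x) (b : F y) :
  tr F e a = b -> a = tr F (eq_sym e) b.
Proof. now destruct e. Qed.

Lemma trT_gone (X : gog) (x y : X) (e : x = y) : tr (@GrT X) e gone = gone.
Proof. now destruct e. Qed.

Lemma trT_gmul (X : gog) (x y : X) (e : x = y) (a b : Gr x) :
  tr (@GrT X) e (gmul a b) = gmul (tr (@GrT X) e a) (tr (@GrT X) e b).
Proof. now destruct e. Qed.

Lemma resm_trT (X : gog) (x y : X) (e : x = y) (g : Gr x) :
  resm (tr (@GrT X) e g) = tr (@GrT X) (f_equal gm e) (resm g).
Proof. now destruct e. Qed.

Lemma LG_tr (X : gog) (u u' : X) (e : u = u') (g : Gr u) : LG u g = LG u' (tr (@GrT X) e g).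
Proof. now destruct e. Qed.

Lemma FBRep_tr (Y X : gog) (B : gob Y X) (z z' : B) (e : z = z') q (b : Bs z) p :
  FBRep z q b p = FBRep z' q (tr (@BsT Y X B) e b) p.
Proof. now destruct e. Qed.

Definition dec_eq (A : Type) (a b : A) : {a = b} + {a <> b} :=
  excluded_middle_informative (a = b).

Section Groups.
Variable G : group.

Lemma gmulV_r (g : G) : gmul g (ginv g) = gone.
Proof.
  rewrite <- (gmul1 (gmul g (ginv g))), <- (gmulV (ginv g)) at 1.
  rewrite <- gmulA, (gmulA (ginv g) g (ginv g)), gmulV, gmul1.
  apply gmulV.
Qed.

Lemma gmul1_r (g : G) : gmul g gone = g.
Proof. now rewrite <- (gmulV g), gmulA, gmulV_r, gmul1. Qed.

Lemma ginv_ginv (g : G) : ginv (ginv g) = g.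
Proof. now rewrite <- (gmul1_r (ginv (ginv g))), <- (gmulV g), gmulA, gmulV, gmul1. Qed.

Lemma gmul_cancel_l (a b c : G) : gmul a b = gmul a c -> b = c.
Proof. intro H. now rewrite <- (gmul1 b), <- (gmul1 c), <- (gmulV a), <- !gmulA, H. Qed.
End Groups.

Lemma hom_one (G H : group) (f : G -> H) : is_hom f -> f gone = gone.
Proof.
  intro hf. apply (gmul_cancel_l (a := f gone)). now rewrite <- hf, gmul1, gmul1_r.
Qed.

Lemma crst_typed (A : Type) (R : relation A) (P : A -> Prop) x y :
  (forall a b, R a b -> P a /\ P b) -> clos_refl_sym_trans A R x y ->
  x = y \/ (P x /\ P y).
Proof.
  intros HR H; induction H as [a b Hab | a | a b _ IH | a b c _ IH1 _ IH2].
  - right; auto.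
  - now left.
  - destruct IH as [->|[]]; auto.
  - destruct IH1 as [->|[]], IH2 as [->|[]]; auto.
Qed.

Lemma crst_map (A A' : Type) (R : relation A) (S : relation A') (f : A -> A') :
  equivalence A' S -> (forall a b, R a b -> S (f a) (f b)) ->
  forall x y, clos_refl_sym_trans A R x y -> S (f x) (f y).
Proof.
  intros [Srefl Strans Ssym] HR x y H.
  induction H; eauto.
Qed.

Definition opt_rel (A : Type) (R : relation A) : relation (option A) :=
  fun x y => match x, y with
             | Some a, Some b => R a b
             | None, None => True
             | _, _ => False
             end.

Lemma opt_rel_equiv (A : Type) (R : relation A) :
  equivalence A R -> equivalence (option A) (opt_rel R).
Proof.
  intros [Rrefl Rtrans Rsym]; split.
  - intros [a|]; simpl; auto.
  - intros [a|] [b|] [c|]; simpl; try tauto. apply Rtrans.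
  - intros [a|] [b|]; simpl; auto.
Qed.


Lemma crst_of_eq (A : Type) (R : relation A) x y : x = y -> clos_refl_sym_trans A R x y.
Proof. intros ->; apply rst_refl. Qed.

Lemma fbeq_step (Y X : gog) (B : gob Y X) (y : Y) (x : X) (r r' : fbrep B) :
  fb_typ y x r -> fb_typ y x r' -> fb_rel y x r r' -> fbeq y x r r'.
Proof. intros; now apply rst_step. Qed.

Lemma gb_vert (X : graph) (v : X) : gm v = v -> gb v = v.
Proof. apply gm_gb. Qed.

Lemma gp_vert (X : graph) (v : X) : gm v = v -> gp v = v.
Proof. intro h. unfold gp. now rewrite gb_vert. Qed.

Lemma gp_gb (X : graph) (x : X) : gp (gb x) = gm x.
Proof. unfold gp; now rewrite gbK. Qed.

Lemma gb_edge (X : graph) (x : X) : gm x <> x -> gm (gb x) <> gb x.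
Proof. intros hx h. apply hx, gm_gb. apply gm_gb in h. now rewrite gbK in h. Qed.

Lemma gmorph_vert (X Y : graph) (f : gmorph X Y) (v : X) : gm v = v -> gm (f v) = f v.
Proof. intro h. now rewrite <- gmap_m, h. Qed.

(** * Words in the fundamental groupoid *)

Section Words.
Variable X : gog.
Hypothesis hX : gog_valid X.

Lemma wpath_app (v u w : X) l r : wpath v u l -> wpath u w r -> wpath v w (l ++ r).
Proof.
  revert v; induction l as [|[x|u' g] l IH]; intros v Hl Hr; simpl in *.
  - now subst.
  - destruct Hl; auto.
  - destruct Hl as [? []]; auto.
Qed.

Lemma wpath_app_inv (v w : X) l r : wpath v w (l ++ r) -> exists u, wpath v u l /\ wpath u w r.
Proof.
  revert v; induction l as [|[x|u' g] l IH]; intros v H; simpl in *.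
  - eauto.
  - destruct H as [H1 H2]. destruct (IH _ H2) as [u []]; eauto.
  - destruct H as [H1 [H2 H3]]. destruct (IH _ H3) as [u []]; eauto.
Qed.

Lemma winv_cons (a : letter X) l : winv (a :: l) = winv l ++ [linv a].
Proof. reflexivity. Qed.

Lemma winv_winv (l : list (letter X)) : winv (winv l) = l.
Proof.
  unfold winv; rewrite map_rev, rev_involutive, map_map.
  induction l as [|[x|v g] l IH]; simpl; f_equal; auto.
  - now rewrite gbK.
  - now rewrite ginv_ginv.
Qed.

Lemma wpath_winv (v w : X) l : wpath v w l -> wpath w v (winv l).
Proof.
  revert v; induction l as [|[x|u g] l IH]; intros v H; simpl in *.
  - now subst.
  - destruct H as [<- H2]. apply wpath_app with (gp x); auto. simpl.
    now rewrite gp_gb.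
  - destruct H as [H1 [<- H3]]. apply wpath_app with u; simpl; auto.
Qed.

Lemma weq_ctx (v u u' w : X) l s t r :
  weq u u' s t -> wpath v u l -> wpath u' w r -> weq v w (l ++ s ++ r) (l ++ t ++ r).
Proof.
  intros H Hl Hr.
  induction H as [s t [Hs [Ht [l0 [r0 [a [b [Hp [-> ->]]]]]]]] | | |].
  - apply rst_step; repeat split; try (apply wpath_app with u; auto; apply wpath_app with u'; auto).
    exists (l ++ l0), (r0 ++ r), a, b; split; auto; split; now rewrite <- !app_assoc.
  - apply rst_refl.
  - now apply rst_sym.
  - eapply rst_trans; eauto.
Qed.

Lemma weq_app_l (v u w : X) l s t : weq u w s t -> wpath v u l -> weq v w (l ++ s) (l ++ t).
Proof.
  intros H Hl. pose proof (weq_ctx (r := []) H Hl (eq_refl w)) as H0.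
  now rewrite !app_nil_r in H0.
Qed.

Lemma weq_app_r (v u w : X) s t r : weq v u s t -> wpath u w r -> weq v w (s ++ r) (t ++ r).
Proof. intros H Hr. exact (weq_ctx (l := []) H (eq_refl v) Hr). Qed.

Lemma weq_typ (v w : X) s t : weq v w s t -> (wpath v w s <-> wpath v w t).
Proof. intro H; induction H as [s t [Hs [Ht _]]| | |]; tauto. Qed.

Lemma prel_typ (u w : X) a b : prel a b -> wpath u w a -> wpath u w b.
Proof.
  intros Hp; destruct Hp; simpl.
  - intros [h1 [h2 [h3 [h4 h5]]]]; now subst.
  - intros [h1 [h2 h3]]; now subst.
  - intros [h1 h2]. rewrite gp_vert in h2 by auto. now subst.
  - intros [h1 [h2 h3]]. rewrite gp_gb in h3. now subst.
  - intros [h1 [h2 [h3 h4]]]. subst. repeat split; auto; apply gmV.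
Qed.

Lemma weq_prel (v w : X) l a b r :
  prel a b -> wpath v w (l ++ a ++ r) -> weq v w (l ++ a ++ r) (l ++ b ++ r).
Proof.
  intros Hp H. destruct (wpath_app_inv H) as [u1 [H1 H2]].
  destruct (wpath_app_inv H2) as [u2 [H3 H4]].
  apply weq_ctx with u1 u2; auto.
  apply rst_step; repeat split; eauto using prel_typ.
  exists [], [], a, b; simpl; now rewrite !app_nil_r.
Qed.

Lemma weq_prel' (v w : X) l a b r s t :
  prel a b -> wpath v w (l ++ a ++ r) -> s = l ++ a ++ r -> t = l ++ b ++ r -> weq v w s t.
Proof. intros; subst; now apply weq_prel. Qed.

Lemma weq_inv_r (v w : X) p : wpath v w p -> weq v v (p ++ winv p) [].
Proof.
  revert v; induction p as [|[x|u g] p IH]; intros v H.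
  - apply rst_refl.
  - destruct H as [<- H2]. rewrite winv_cons.
    assert (Hx : wpath (gm x) (gm x) [LX x; LX (gb x)]) by (simpl; now rewrite gp_gb).
    eapply rst_trans.
    + replace ((LX x :: p) ++ winv p ++ [linv (LX x)]) with ([LX x] ++ (p ++ winv p) ++ [LX (gb x)])
        by (simpl; now rewrite <- app_assoc).
      apply weq_ctx with (gp x) (gp x); simpl; auto.
      now rewrite gp_gb.
    + exact (weq_prel (l := []) (r := []) (pr_inv x) Hx).
  - destruct H as [H1 [<- H3]]. rewrite winv_cons.
    eapply rst_trans.
    + replace ((LG u g :: p) ++ winv p ++ [linv (LG u g)])
        with ([LG u g] ++ (p ++ winv p) ++ [LG u (ginv g)])
        by (simpl; now rewrite <- app_assoc).
      apply weq_ctx with u u; simpl; auto.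
    + eapply rst_trans.
      * apply (weq_prel (l := []) (r := []) (pr_mul g (ginv g))). simpl; auto.
      * simpl. rewrite gmulV_r. apply (weq_prel (l := []) (r := []) (pr_one u)). simpl; auto.
Qed.

Lemma weq_inv_l (v w : X) p : wpath v w p -> weq w w (winv p ++ p) [].
Proof.
  intro H. rewrite <- (winv_winv p) at 2. apply weq_inv_r with v. now apply wpath_winv.
Qed.

Lemma weq_drop_vert (v w : X) l x r :
  gm x = x -> wpath v w (l ++ LX x :: r) -> weq v w (l ++ LX x :: r) (l ++ r).
Proof. intros hx H. exact (weq_prel (a := [LX x]) (pr_vert hx) H). Qed.

Lemma conn_path (x y : X) : exists p, wpath (gm x) (gm y) p.
Proof.
  destruct hX as [hc _]. specialize (hc x y).
  induction hc as [a b [->| ->]| a | a b _ [p Hp] | a b c _ [p1 H1] _ [p2 H2]].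
  - exists []; simpl; now rewrite gmV.
  - now exists [LX a].
  - now exists [].
  - exists (winv p); now apply wpath_winv.
  - exists (p1 ++ p2); eapply wpath_app; eauto.
Qed.
End Words.

Section LeibnizBisets.
Variables (Y X : gog) (B : gob Y X).
Hypotheses (hY : gog_valid Y) (hX : gog_valid X) (hB : gob_valid B) (hBl : leibniz_gob B).

Lemma beq_eq (z : B) (x y : Bs z) : beq x y -> x = y.
Proof. apply hBl. Qed.

Lemma Bs_valid (z : B) : biset_valid (Bs z).
Proof. apply hB. Qed.

Lemma lact_ract (z : B) g (x : Bs z) h : lact g (ract x h) = ract (lact g x) h.
Proof. apply beq_eq, (Bs_valid z). Qed.

Lemma lact_one (z : B) (x : Bs z) : lact gone x = x.
Proof. apply beq_eq, (Bs_valid z). Qed.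

Lemma ract_one (z : B) (x : Bs z) : ract x gone = x.
Proof. apply beq_eq, (Bs_valid z). Qed.

Lemma ract_ract (z : B) (x : Bs z) h h' : ract (ract x h) h' = ract x (gmul h h').
Proof. apply beq_eq, (Bs_valid z). Qed.

Lemma bm_lact_ract (z : B) g (x : Bs z) h :
  bm (lact g (ract x h)) =
  lact (tr (@GrT Y) (eq_sym (gmap_m lam z)) (resm g))
       (ract (bm x) (tr (@GrT X) (eq_sym (gmap_m rho z)) (resm h))).
Proof. apply beq_eq, hB. Qed.

Lemma bb_lact_ract (z : B) g (x : Bs z) h :
  bb (lact g (ract x h)) =
  lact (tr (@GrT Y) (eq_sym (gmap_b lam z)) (resb g))
       (ract (bb x) (tr (@GrT X) (eq_sym (gmap_b rho z)) (resb h))).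
Proof. apply beq_eq, hB. Qed.

Lemma bm_lact (z : B) g (x : Bs z) :
  bm (lact g x) = lact (tr (@GrT Y) (eq_sym (gmap_m lam z)) (resm g)) (bm x).
Proof.
  rewrite <- (ract_one x) at 1.
  now rewrite bm_lact_ract, (hom_one (proj1 (proj2 hX) _)), trT_gone, ract_one.
Qed.

Lemma bm_ract (z : B) (x : Bs z) h :
  bm (ract x h) = ract (bm x) (tr (@GrT X) (eq_sym (gmap_m rho z)) (resm h)).
Proof.
  rewrite <- (lact_one (ract x h)).
  now rewrite bm_lact_ract, (hom_one (proj1 (proj2 hY) _)), trT_gone, lact_one.
Qed.

Lemma bb_lact (z : B) g (x : Bs z) :
  bb (lact g x) = lact (tr (@GrT Y) (eq_sym (gmap_b lam z)) (resb g)) (bb x).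
Proof.
  rewrite <- (ract_one x) at 1.
  now rewrite bb_lact_ract, (hom_one (proj1 (proj2 (proj2 hX)) _)), trT_gone, ract_one.
Qed.

Lemma bb_ract (z : B) (x : Bs z) h :
  bb (ract x h) = ract (bb x) (tr (@GrT X) (eq_sym (gmap_b rho z)) (resb h)).
Proof.
  rewrite <- (lact_one (ract x h)).
  now rewrite bb_lact_ract, (hom_one (proj1 (proj2 (proj2 hY)) _)), trT_gone, lact_one.
Qed.

Lemma bm_vert (z : B) (e : gm z = z) (x : Bs z) : tr (@BsT Y X B) e (bm x) = x.
Proof. apply beq_eq, hB. Qed.

Lemma bb_vert (z : B) (e : gb z = z) (x : Bs z) : tr (@BsT Y X B) e (bb x) = x.
Proof. apply beq_eq, hB. Qed.

Lemma bm_tr (z z' : B) (e : z = z') (x : Bs z) :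
  bm (tr (@BsT Y X B) e x) = tr (@BsT Y X B) (f_equal gm e) (bm x).
Proof. now destruct e. Qed.

Lemma bm_bbK (z : B) (x : Bs z) :
  tr (@BsT Y X B) (f_equal gm (gbK z)) (bm (bb (bb x))) = bm x.
Proof. rewrite <- bm_tr. f_equal. apply beq_eq, hB. Qed.
End LeibnizBisets.

Section LeftFibrant.
Variables (Y X : gog) (B : gob Y X).
Hypotheses (hB : gob_valid B) (hBl : leibniz_gob B) (hfib : left_fibrant B).

Definition fib_choose (v : B) (f : X) (b : Bs v) : option (fibel v f) :=
  match excluded_middle_informative (exists d : fibel v f, fibmap d = b) with
  | left H => Some (proj1_sig (constructive_indefinite_description _ H))
  | right _ => None
  end.
Arguments fib_choose : clear implicits.

Lemma fib_choose_spec (v : B) f b d : fib_choose v f b = Some d -> fibmap d = b.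
Proof.
  unfold fib_choose. destruct (excluded_middle_informative _) as [H|H]; [|discriminate].
  intros [= <-]. apply (proj2_sig (constructive_indefinite_description _ H)).
Qed.

Variables (v : B) (hv : gm v = v) (f : X) (hfv : gm f = rho v) (hfe : gm f <> f).

Lemma fibmap_lact g (d : fibel v f) : fibmap (fib_lact g d) = lact g (fibmap d).
Proof. apply (beq_eq hBl), (proj2 hfib v hv f hfv hfe). Qed.

Lemma fibmap_ract (d : fibel v f) h :
  fibmap (fib_ract d h) = ract (fibmap d) (tr (@GrT X) hfv (resm h)).
Proof. apply (beq_eq hBl), (proj2 hfib v hv f hfv hfe). Qed.

Lemma fibmap_inj (d d' : fibel v f) :
  fibmap d = fibmap d' -> clos_refl_sym_trans _ (@fib_rel Y X B v f) d d'.
Proof.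
  intro E; apply (proj2 hfib v hv f hfv hfe). rewrite E.
  apply (equiv_refl _ _ (proj1 (Bs_valid hB _))).
Qed.

Lemma fib_choose_some (b : Bs v) : exists d : fibel v f, fib_choose v f b = Some d.
Proof.
  unfold fib_choose. destruct (excluded_middle_informative _) as [H|H]; [eauto|].
  exfalso; apply H.
  destruct (proj2 (proj2 (proj2 (proj2 hfib v hv f hfv hfe))) b) as [d Hd].
  exists d; now apply (beq_eq hBl).
Qed.
End LeftFibrant.
Arguments fib_choose {Y X B} v f b.

(** * Pushing paths through a left-fibrant graph of bisets *)

Section Push.
Variables (Y X : gog) (B : gob Y X).
Hypotheses (hY : gog_valid Y) (hX : gog_valid X) (hB : gob_valid B) (hBl : leibniz_gob B)
  (hfib : left_fibrant B).
Variable y0 : Y.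

(* A state [State v q b] stands for [q b] in [pi_1(Y, y0, lam v) (x) B_v]. Reading a letter of
   [pi_1(X)] on the right of [b] is absorbed into the state: a vertex-group element acts on [b],
   and an edge [f] of [X] at [rho v] is crossed by writing [b = g e^- b'] (left-fibrancy) and
   moving to [(q g lam(e), b'^+)] at the other end of [e]. *)
Record state := State { sv : B; sq : list (letter Y); sb : Bs sv }.
Arguments State : clear implicits.

Lemma State_tr (v v' : B) (e : v = v') q (b : Bs v) :
  State v q b = State v' q (tr (@BsT Y X B) e b).
Proof. now destruct e. Qed.

Definition cross (q : list (letter Y)) (v : B) (f : X) (d : fibel v f) : state :=
  State (gm (gb (fe d))) (q ++ [LG (lam v) (fg d); LX (lam (fe d))]) (bm (bb (fb d))).

(* Letters that do not fit the current vertex leave the state unchanged; this never happens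
   along a composable word. *)
Definition state_step (s : state) (a : letter X) : state :=
  match a with
  | LG u g =>
      match dec_eq u (rho (sv s)) with
      | left e => State (sv s) (sq s) (ract (sb s) (tr (@GrT X) e g))
      | right _ => s
      end
  | LX x =>
      match dec_eq (gm x) x with
      | left _ => s
      | right _ =>
          match fib_choose (sv s) x (sb s) with
          | Some d => cross (sq s) d
          | None => s
          end
      end
  end.

Definition state_push (s : state) (l : list (letter X)) : state := fold_left state_step l s.

Lemma state_push_app s l r : state_push s (l ++ r) = state_push (state_push s l) r.
Proof. apply fold_left_app. Qed.

Definition state_typ (u : X) (s : state) : Prop :=
  gm (sv s) = sv s /\ rho (sv s) = u /\ wpath y0 (lam (sv s)) (sq s).

Inductive state_rel : state -> state -> Prop :=
| sr_q (v : B) q q' (b : Bs v) : weq y0 (lam v) q q' -> state_rel (State v q b) (State v q' b)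
| sr_l (v : B) q g (b : Bs v) : state_rel (State v (q ++ [LG (lam v) g]) b) (State v q (lact g b)).

Definition state_eq (u : X) : relation state :=
  clos_refl_sym_trans _ (fun s t => state_typ u s /\ state_typ u t /\ state_rel s t).

Lemma state_typ_init (v : B) q (b : Bs v) :
  gm v = v -> wpath y0 (lam v) q -> state_typ (rho v) (State v q b).
Proof. now repeat split. Qed.

Lemma state_rel_typ u s t : state_rel s t -> (state_typ u s <-> state_typ u t).
Proof.
  intros [v q q' b Hq | v q g b]; unfold state_typ; simpl.
  - pose proof (weq_typ Hq); tauto.
  - split; intros [h1 [h2 h3]]; repeat split; auto.
    + destruct (wpath_app_inv h3) as [w' [H1 [_ [-> _]]]]; auto.
    + apply wpath_app with (lam v); auto. simpl; repeat split; auto.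
      now apply (gmorph_vert lam).
Qed.

Lemma state_eq_rel u s t : state_typ u s -> state_rel s t -> state_eq u s t.
Proof. intros h m; apply rst_step; pose proof (state_rel_typ u m); tauto. Qed.

Lemma state_eq_rel' u s t : state_typ u t -> state_rel s t -> state_eq u s t.
Proof. intros h m; apply rst_step; pose proof (state_rel_typ u m); tauto. Qed.

Lemma state_eq_typ u s t : state_eq u s t -> state_typ u s -> state_typ u t.
Proof.
  intros H h.
  destruct (crst_typed (P := state_typ u) (fun a b H => conj (proj1 H) (proj1 (proj2 H))) H)
    as [<-|[]]; auto.
Qed.

Lemma cross_path (v : B) (f : X) (d : fibel v f) :
  gm v = v -> wpath (lam v) (lam (gm (gb (fe d)))) [LG (lam v) (fg d); LX (lam (fe d))].
Proof.
  intro hv. destruct d as [e hr hs g b]; simpl.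
  split; [now apply (gmorph_vert lam)|]. repeat split.
  - now rewrite <- gmap_m, hs.
  - unfold gp. now rewrite gmap_m, gmap_b.
Qed.

Lemma cross_typ (v : B) (f : X) (d : fibel v f) q :
  gm v = v -> wpath y0 (lam v) q -> state_typ (gp f) (cross q d).
Proof.
  intros hv hq. destruct d as [e hr hs g b]; unfold cross, state_typ; simpl.
  split; [apply gmV|split].
  - now rewrite gmap_m, gmap_b, hr.
  - apply wpath_app with (lam v); auto. exact (cross_path (FibEl hr hs g b) hv).
Qed.

Lemma state_step_LG (v : B) q (b : Bs v) w g (e : w = rho v) :
  state_step (State v q b) (LG w g) = State v q (ract b (tr (@GrT X) e g)).
Proof.
  unfold state_step; cbn [sv sq sb]. destruct (dec_eq w (rho v)) as [e'|n]; [|contradiction].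
  now rewrite (proof_irrelevance _ e' e).
Qed.

Lemma state_step_vert s x : gm x = x -> state_step s (LX x) = s.
Proof. intro hx; unfold state_step. now destruct (dec_eq (gm x) x). Qed.

Lemma state_step_edge (v : B) q (b : Bs v) x d :
  gm x <> x -> fib_choose v x b = Some d -> state_step (State v q b) (LX x) = cross q d.
Proof.
  intros hx Hd; unfold state_step; cbn [sv sq sb].
  destruct (dec_eq (gm x) x); [contradiction|]. now rewrite Hd.
Qed.

Lemma state_step_cross (v : B) q (b : Bs v) x :
  gm v = v -> gm x = rho v -> gm x <> x ->
  exists d : fibel v x, fibmap d = b /\ state_step (State v q b) (LX x) = cross q d.
Proof.
  intros hv hxv hx. destruct (fib_choose_some hBl hfib hv hxv hx b) as [d Hd].
  exists d; split; [exact (fib_choose_spec Hd)|exact (state_step_edge q hx Hd)].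
Qed.

Lemma state_step_typ u u' s a : state_typ u s -> wpath u u' [a] -> state_typ u' (state_step s a).
Proof.
  destruct s as [v q b]; intros [hv [hu hq]] Ha; simpl in hv, hu, hq.
  destruct a as [x | w g].
  - destruct Ha as [hx1 hx2]; simpl in hx2. destruct (dec_eq (gm x) x) as [hx|hx].
    + rewrite state_step_vert by auto. rewrite gp_vert in hx2 by auto.
      repeat split; simpl; auto. congruence.
    + subst u'. destruct (state_step_cross q b hv (eq_trans hx1 (eq_sym hu)) hx) as [d [_ ->]].
      now apply cross_typ.
  - destruct Ha as [h1 [<- <-]]. rewrite (state_step_LG q b g (eq_sym hu)).
    now repeat split.
Qed.

Lemma state_push_typ u u' s l : state_typ u s -> wpath u u' l -> state_typ u' (state_push s l).
Proof.
  revert u s; induction l as [|a l IH]; intros u s hs hl; simpl in *.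
  - now subst.
  - destruct (wpath_app_inv (l := [a]) hl) as [u1 [H1 H2]].
    apply IH with u1; eauto using state_step_typ.
Qed.

Lemma cross_fib_step (v : B) (f : X) q (d d' : fibel v f) :
  gm v = v -> gm f = rho v -> wpath y0 (lam v) q ->
  fib_rel d d' -> state_eq (gp f) (cross q d) (cross q d').
Proof.
  intros hv hfv hq [e hr hs g h b | e hr hs g b b' Hb];
    [|now rewrite (beq_eq hBl Hb); apply rst_refl].
  pose proof (cross_typ (FibEl hr hs (gmul g (fib_phi hs h)) b) hv hq) as T1.
  pose proof (cross_typ (FibEl hr hs g (lact h b)) hv hq) as T2.
  unfold cross in *; cbn [fe fg fb] in *.
  rewrite (bb_lact hX hB hBl), (bm_lact hX hB hBl) in *.
  assert (E : gm (gb (lam e)) = lam (gm (gb e))) by now rewrite gmap_m, gmap_b.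
  assert (Eh : tr (@GrT Y) (eq_sym (gmap_m lam (gb e)))
                 (resm (tr (@GrT Y) (eq_sym (gmap_b lam e)) (resb h)))
               = tr (@GrT Y) E (resm (resb h)))
    by (rewrite resm_trT, tr_trans; apply tr_irr).
  rewrite Eh in *.
  eapply rst_trans; [|apply state_eq_rel'; [exact T2|apply sr_l]].
  apply state_eq_rel; [exact T1|]. apply sr_q.
  assert (W : wpath y0 (lam (gm (gb e)))
                (q ++ [LG (lam v) g] ++ [LG (lam v) (fib_phi hs h); LX (lam e)] ++ [])).
  { apply wpath_app with (lam v); [exact hq|].
    pose proof (cross_path (FibEl hr hs g b) hv) as P; simpl in P |- *; tauto. }
  (* [g phi(h) lam(e)] becomes [g lam(e) (h-bar)^-] by the relation [g^- x = x g^+] *)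
  apply rst_trans with (q ++ [LG (lam v) g] ++ [LG (lam v) (fib_phi hs h); LX (lam e)] ++ []).
  - apply rst_sym. apply (weq_prel' (l := q) (r := [LX (lam e)]) (pr_mul g (fib_phi hs h))).
    + now rewrite app_nil_r in W.
    + reflexivity.
    + reflexivity.
  - unfold fib_phi in *. rewrite <- LG_tr in *.
    apply (weq_prel' (l := q ++ [LG (lam v) g]) (r := []) (pr_conj h)).
    + now rewrite <- app_assoc.
    + now rewrite <- app_assoc.
    + now rewrite (LG_tr E), <- !app_assoc.
Qed.

Lemma cross_fib_rel (v : B) (f : X) q (d d' : fibel v f) :
  gm v = v -> gm f = rho v -> wpath y0 (lam v) q ->
  clos_refl_sym_trans _ (@fib_rel Y X B v f) d d' -> state_eq (gp f) (cross q d) (cross q d').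
Proof.
  intros hv hfv hq. apply crst_map; [apply clos_rst_is_equiv|].
  intros; now apply cross_fib_step.
Qed.

Lemma state_step_rel u u' s t a :
  state_typ u s -> state_typ u t -> state_rel s t -> wpath u u' [a] ->
  state_eq u' (state_step s a) (state_step t a).
Proof.
  intros hs ht m Ha.
  pose proof (state_step_typ hs Ha) as hs'.
  destruct ht as [hv [hu hq]].
  destruct a as [x | w h].
  2:{ destruct Ha as [_ [<- <-]].
      destruct m as [v q q' b Hq | v q g b]; simpl in hu;
        rewrite !(state_step_LG _ _ _ (eq_sym hu)) in *; apply state_eq_rel; auto.
      - now constructor.
      - rewrite <- (lact_ract hB hBl). constructor. }
  destruct (dec_eq (gm x) x) as [hx|hx].
  { rewrite !state_step_vert in * by auto. now apply state_eq_rel. }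
  destruct Ha as [hx1 hx2]; simpl in hx2; subst u'.
  destruct m as [v q q' b Hq | v q g b]; simpl in hv, hu, hq;
    assert (hxv : gm x = rho v) by congruence.
  - destruct (fib_choose_some hBl hfib hv hxv hx b) as [d Hd].
    rewrite !(state_step_edge _ hx Hd) in *.
    apply state_eq_rel; auto. constructor.
    apply weq_app_r with (lam v); auto. now apply cross_path.
  - destruct (fib_choose_some hBl hfib hv hxv hx b) as [d1 H1].
    destruct (fib_choose_some hBl hfib hv hxv hx (lact g b)) as [d2 H2].
    rewrite (state_step_edge _ hx H1), (state_step_edge _ hx H2) in *.
    apply rst_trans with (cross q (fib_lact g d1)).
    + apply state_eq_rel; auto. destruct d1 as [e hr hse g1 b1]. unfold cross in *; simpl in *.
      constructor.
      apply (weq_prel' (l := q) (r := [LX (lam e)]) (pr_mul g g1)).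
      * destruct hs' as [_ [_ W]]. simpl in W. now rewrite <- !app_assoc in W.
      * now rewrite <- !app_assoc.
      * reflexivity.
    + apply cross_fib_rel; auto. apply (fibmap_inj hB hfib); auto.
      now rewrite (fibmap_lact hBl hfib), (fib_choose_spec H1), (fib_choose_spec H2).
Qed.

Lemma state_push_eq u u' s t l :
  state_eq u s t -> wpath u u' l -> state_eq u' (state_push s l) (state_push t l).
Proof.
  revert u s t; induction l as [|a l IH]; intros u s t H hl.
  - simpl in hl; now subst.
  - destruct (wpath_app_inv (l := [a]) hl) as [u1 [H1 H2]].
    apply (IH u1 (state_step s a) (state_step t a)); auto.
    revert H; apply (crst_map (f := fun s => state_step s a)); [apply clos_rst_is_equiv|].
    intros s' t' [hs [ht m]]. eapply state_step_rel; eauto.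
Qed.

Lemma state_step_back (e : B) Q (b : Bs e) :
  gm (rho e) <> rho e -> wpath y0 (lam (gm (gb e))) Q ->
  state_eq (gm (rho e)) (state_step (State (gm (gb e)) Q (bm (bb b))) (LX (gb (rho e))))
    (State (gm e) (Q ++ [LX (lam (gb e))]) (bm b)).
Proof.
  intros he hQ.
  assert (hv : gm (gm (gb e)) = gm (gb e)) by apply gmV.
  assert (hfv : gm (gb (rho e)) = rho (gm (gb e))) by now rewrite gmap_m, gmap_b.
  destruct (state_step_cross Q (bm (bb b)) hv hfv (gb_edge he)) as [d [Hd ->]].
  set (ds := @FibEl Y X B (gm (gb e)) (gb (rho e)) (gb e) (gmap_b rho e) eq_refl gone (bb b)).
  assert (Ed : fibmap d = fibmap ds)
    by (rewrite Hd; unfold ds, fibmap; simpl; rewrite (lact_one hB hBl); reflexivity).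
  pose proof (cross_typ ds hv hQ) as Ts.
  rewrite <- (gp_gb (rho e)).
  apply rst_trans with (cross Q ds).
  { apply cross_fib_rel; auto. exact (fibmap_inj hB hfib hv hfv (gb_edge he) Ed). }
  unfold cross, ds in *; cbn [fe fg fb] in *.
  rewrite (State_tr (f_equal gm (gbK e))) in *. rewrite (bm_bbK hB hBl) in *.
  apply state_eq_rel; auto. constructor.
  apply (weq_prel' (l := Q) (r := [LX (lam (gb e))]) (pr_one (lam (gm (gb e))))).
  - destruct Ts as [_ [_ W]]. exact W.
  - reflexivity.
  - reflexivity.
Qed.

Lemma state_push_inv (s : state) x :
  state_typ (gm x) s -> state_eq (gm x) (state_push s [LX x; LX (gb x)]) s.
Proof.
  destruct s as [v q b]; intros Ts. pose proof Ts as [hv [hu hq]]; simpl in hv, hu, hq.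
  destruct (dec_eq (gm x) x) as [hx|hx].
  { unfold state_push; cbn [fold_left]. rewrite !state_step_vert; [apply rst_refl|auto|].
    now rewrite (gb_vert hx). }
  destruct (state_step_cross q b hv (eq_sym hu) hx) as [[e hr hs g be] [Eb E]].
  unfold state_push; cbn [fold_left]; rewrite E. unfold fibmap in Eb; simpl in Eb; subst x v b.
  unfold cross; cbn [fe fg fb].
  pose proof (cross_typ (FibEl (v := gm e) (f := rho e) eq_refl eq_refl g be) hv hq) as To.
  assert (T1 : state_typ (gm (rho e)) (State (gm e) (q ++ [LG (lam (gm e)) g]) (bm be))).
  { apply (proj2 (state_rel_typ (gm (rho e)) (sr_l q g (bm be)))). exact Ts. }
  (* cross [e] and come back along its reverse; the path [lam(e) lam(e)-bar] then cancels *)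
  apply rst_trans with
    (State (gm e) ((q ++ [LG (lam (gm e)) g; LX (lam e)]) ++ [LX (lam (gb e))]) (bm be)).
  { now apply state_step_back; [|apply To]. }
  eapply rst_trans; [apply state_eq_rel'; [exact T1|apply sr_q]|].
  - pose proof (state_eq_typ (state_step_back be hx (proj2 (proj2 To)))
      (state_step_typ To (a := LX (gb (rho e))) (conj eq_refl (gp_gb (rho e))))) as [_ [_ W]].
    simpl in W. rewrite (gmap_b lam), <- !app_assoc in W.
    apply (weq_prel' (l := q ++ [LG (lam (gm e)) g]) (r := []) (pr_inv (lam e))).
    + now rewrite <- !app_assoc.
    + now rewrite (gmap_b lam), <- !app_assoc.
    + now rewrite app_nil_r.
  - apply state_eq_rel; [exact T1|]. apply sr_l.
Qed.

Lemma state_push_conj (s : state) x (g : Gr x) :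
  state_typ (gm x) s ->
  state_eq (gp x) (state_push s [LG (gm x) (resm g); LX x])
    (state_push s [LX x; LG (gm (gb x)) (resm (resb g))]).
Proof.
  destruct s as [v q b0]; intros Ts. pose proof Ts as [hv [hu hq]]; simpl in hv, hu, hq.
  assert (e1 : gm x = rho v) by auto.
  unfold state_push; cbn [fold_left]. rewrite (state_step_LG _ _ _ e1).
  destruct (dec_eq (gm x) x) as [hx|hx].
  - rewrite !state_step_vert by auto.
    assert (hb : gb x = x) by now apply gb_vert.
    assert (e2 : gm (gb x) = rho v) by now rewrite hb.
    rewrite (state_step_LG _ _ _ e2). apply crst_of_eq. do 3 f_equal.
    assert (Hg : tr (@GrT X) hb (resb g) = g) by apply hX.
    apply tr_sym in Hg. rewrite Hg, resm_trT, tr_trans. apply tr_irr.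
  - destruct (fib_choose_some hBl hfib hv e1 hx b0) as [d2 Hd2].
    destruct (fib_choose_some hBl hfib hv e1 hx (ract b0 (tr (@GrT X) e1 (resm g)))) as [d1 Hd1].
    rewrite (state_step_edge _ hx Hd1), (state_step_edge _ hx Hd2).
    apply rst_trans with (cross q (fib_ract d2 g)).
    + apply cross_fib_rel; auto. apply (fibmap_inj hB hfib hv e1 hx).
      now rewrite (fibmap_ract hBl hfib hv e1 hx), (fib_choose_spec Hd1), (fib_choose_spec Hd2).
    + destruct d2 as [e hr hs g2 b2]. subst x. unfold cross, fib_ract; cbn [fe fg fb fe_rho fe_src].
      assert (e3 : gm (gb (rho e)) = rho (gm (gb e))) by now rewrite gmap_m, gmap_b.
      rewrite (state_step_LG _ _ _ e3). apply crst_of_eq. f_equal.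
      rewrite (bb_ract hY hB hBl), (bm_ract hY hB hBl). f_equal.
      rewrite tr_id, resm_trT, tr_trans. apply tr_irr.
Qed.

Lemma state_push_prel u u' s a b :
  state_typ u s -> prel a b -> wpath u u' a -> state_eq u' (state_push s a) (state_push s b).
Proof.
  intros Ts Hp Ha. destruct s as [v q b0]. pose proof Ts as [hv [hu hq]]; simpl in hu.
  destruct Hp as [w g h | w | w hw | x | x g]; simpl in Ha; unfold state_push; cbn [fold_left].
  - destruct Ha as [_ [<- [_ [_ <-]]]].
    rewrite !(state_step_LG _ _ _ (eq_sym hu)), (ract_ract hB hBl), trT_gmul. apply rst_refl.
  - destruct Ha as [_ [<- <-]].
    rewrite (state_step_LG _ _ _ (eq_sym hu)), trT_gone, (ract_one hB hBl). apply rst_refl.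
  - rewrite state_step_vert by auto. apply rst_refl.
  - destruct Ha as [<- [_ Ha]]. rewrite gp_gb in Ha; subst u'. now apply state_push_inv.
  - destruct Ha as [_ [<- [_ <-]]]. now apply state_push_conj.
Qed.

Lemma state_push_weq u u' s W W' :
  state_typ u s -> weq u u' W W' -> state_eq u' (state_push s W) (state_push s W').
Proof.
  intros Ts. apply (crst_map (f := state_push s)); [apply clos_rst_is_equiv|].
  intros ? ? [HW [_ [l [r [a [b [Hp [-> ->]]]]]]]].
  rewrite !state_push_app.
  destruct (wpath_app_inv HW) as [u1 [H1 H2]].
  destruct (wpath_app_inv H2) as [u2 [H3 H4]].
  apply state_push_eq with u2; auto.
  apply state_push_prel with u1; eauto using state_push_typ.
Qed.

Lemma state_step_return (z : B) q (b : Bs z) :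
  gm z <> z -> wpath y0 (lam (gm z)) q ->
  state_eq (rho (gm z)) (State (gm z) q (bm b))
    (state_step (State (gm (gb z)) (q ++ [LX (lam z)]) (bm (bb b))) (LX (gb (rho z)))).
Proof.
  intros hz hq.
  assert (hre : gm (rho z) <> rho z) by now apply (proj1 hfib).
  assert (hq' : wpath y0 (lam (gm (gb z))) (q ++ [LX (lam z)])).
  { apply wpath_app with (lam (gm z)); auto. simpl. rewrite !gmap_m. split; auto.
    unfold gp. now rewrite gmap_b. }
  assert (Ha : wpath (rho (gm (gb z))) (gm (rho z)) [LX (gb (rho z))]).
  { simpl. rewrite gmap_m, gmap_b. split; auto. apply gp_gb. }
  pose proof (state_step_back b hre hq') as Hbk.
  pose proof (state_eq_typ Hbk (state_step_typ (state_typ_init (bm (bb b)) (gmV _) hq') Ha)) as T.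
  rewrite gmap_m. apply rst_sym. eapply rst_trans; [exact Hbk|].
  apply state_eq_rel; [exact T|]. constructor.
  destruct T as [_ [_ W]]; cbn [sv sq sb] in W.
  rewrite (gmap_b lam), <- app_assoc in W.
  apply (weq_prel' (l := q) (r := []) (pr_inv (lam z))).
  - exact W.
  - now rewrite (gmap_b lam), <- app_assoc.
  - now rewrite app_nil_r.
Qed.

Definition state_rep (s : state) (p : list (letter X)) : fbrep B := FBRep (sv s) (sq s) (sb s) p.

Section ToFundamentalBiset.
Variable star : X.

Lemma cross_fbeq (v : B) x (d : fibel v x) q Pt :
  gm v = v -> gm x <> x -> wpath y0 (lam v) q -> wpath (gp x) star Pt ->
  fbeq y0 star (FBRep v q (fibmap d) (LX x :: Pt)) (state_rep (cross q d) Pt).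
Proof.
  intros hv hx hq hP. pose proof (cross_typ d hv hq) as [To1 [To2 To3]].
  destruct d as [e hr hs g be]; subst x v. unfold fibmap, cross, state_rep in *.
  cbn [fe fg fb sv sq sb] in *.
  assert (he : gm e <> e) by (intro H; apply hx; now rewrite <- gmap_m, H).
  assert (T1 : wpath y0 (lam (gm e)) (q ++ [LG (lam (gm e)) g])).
  { apply wpath_app with (lam (gm e)); auto. simpl. split; [now apply (gmorph_vert lam)|auto]. }
  assert (hP2 : wpath (rho (gm (gb e))) star (LX (gb (rho e)) :: LX (rho e) :: Pt)).
  { simpl. rewrite gmap_m, gmap_b, gp_gb. auto. }
  assert (hme : gm (rho e) = rho (gm e)) by now rewrite gmap_m.
  (* with [b = g (b_e)^-]: move [g] to the left, cross [e] by the edge relation of [B], and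
     cancel the detour [f-bar f] *)
  apply rst_trans with (FBRep (gm e) (q ++ [LG (lam (gm e)) g]) (bm be) (LX (rho e) :: Pt)).
  { apply rst_sym, fbeq_step; [| |apply fbr_l]; repeat split; simpl; auto. }
  apply rst_trans with (FBRep (gm (gb e)) ((q ++ [LG (lam (gm e)) g]) ++ [LX (lam e)]) (bm (bb be))
                          (LX (gb (rho e)) :: LX (rho e) :: Pt)).
  { apply fbeq_step; [| |now apply fbr_e]; repeat split; simpl; auto; try apply gmV.
    - now rewrite <- app_assoc.
    - now rewrite gp_gb. }
  rewrite <- app_assoc.
  apply fbeq_step; cbn [sv sq sb].
  { repeat split; simpl; auto. now rewrite gp_gb. }
  { repeat split; auto. simpl. now rewrite To2. }
  apply fbr_p.
  replace (LX (rho e)) with (LX (gb (gb (rho e)))) by now rewrite gbK.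
  apply (weq_prel' (l := []) (r := Pt) (pr_inv (gb (rho e)))); [|reflexivity..].
  simpl. now rewrite gbK.
Qed.

Lemma state_step_fbeq u u' (s : state) a Pt :
  state_typ u s -> wpath u u' [a] -> wpath u' star Pt ->
  fbeq y0 star (state_rep s (a :: Pt)) (state_rep (state_step s a) Pt).
Proof.
  destruct s as [v q b]; intros [hv [hu hq]] Ha hP; cbn [sv sq sb] in *.
  destruct a as [x | w g].
  - destruct Ha as [hx1 hx2]; simpl in hx2; subst u'.
    destruct (dec_eq (gm x) x) as [hx|hx].
    + rewrite state_step_vert by auto. unfold state_rep; cbn [sv sq sb].
      assert (hxP : wpath (rho v) star (LX x :: Pt)) by (simpl; split; [congruence|exact hP]).
      apply fbeq_step; [split; [|split]; auto..|].
      * simpl. replace (rho v) with (gp x); auto. rewrite gp_vert; congruence.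
      * apply fbr_p. exact (weq_drop_vert (l := []) hx hxP).
    + destruct (state_step_cross q b hv (eq_trans hx1 (eq_sym hu)) hx) as [d [<- ->]].
      now apply cross_fbeq.
  - destruct Ha as [_ [h2 h3]]; simpl in h3; subst u u' w.
    rewrite (state_step_LG q b g eq_refl). unfold state_rep; cbn [sv sq sb].
    apply rst_sym, fbeq_step; repeat split; simpl; auto; [now apply (gmorph_vert rho)|].
    apply fbr_r.
Qed.

Lemma state_push_fbeq (s : state) u u' l Pt :
  state_typ u s -> wpath u u' l -> wpath u' star Pt ->
  fbeq y0 star (state_rep s (l ++ Pt)) (state_rep (state_push s l) Pt).
Proof.
  revert s u; induction l as [|a l IH]; intros s u Ts Hl HP.
  - apply rst_refl.
  - destruct (wpath_app_inv (l := [a]) Hl) as [u1 [H1 H2]].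
    eapply rst_trans.
    + apply (state_step_fbeq (Pt := l ++ Pt) Ts H1). eapply wpath_app; eauto.
    + apply (IH (state_step s a) u1); eauto using state_step_typ.
Qed.
End ToFundamentalBiset.
End Push.
Arguments State {Y X B} sv sq sb.

(** * The comparison map and its inverse *)

Section Composition.
Variables (Y X W : gog) (B : gob Y X) (C : gob X W).
Hypotheses (hY : gog_valid Y) (hX : gog_valid X)
  (hB : gob_valid B) (hBl : leibniz_gob B) (hCl : leibniz_gob C) (hfib : left_fibrant B).
Variables (dag : Y) (star : X) (ddag : W).
Hypothesis hstar : gm star = star.

Notation BC := (gob_prod B C).

Definition base_path (u : X) : list (letter X) :=
  match excluded_middle_informative (exists p, wpath u star p) with
  | left H => proj1_sig (constructive_indefinite_description _ H)
  | right _ => []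
  end.

Lemma base_path_spec (u : X) : gm u = u -> wpath u star (base_path u).
Proof.
  intro hu. unfold base_path. destruct (excluded_middle_informative _) as [H|H].
  - apply (proj2_sig (constructive_indefinite_description _ H)).
  - exfalso; apply H. destruct (conn_path hX u star) as [p Hp].
    rewrite hu, hstar in Hp. eauto.
Qed.

Definition pfst (z : BC) : B := fst (proj1_sig z).
Definition psnd (z : BC) : C := snd (proj1_sig z).

Lemma pvert_vert (v : B) (w : C) (h : rho v = lam w) :
  gm v = v -> gm w = w -> gm (pvert h) = pvert h.
Proof. intros hv hw. apply sig_eq; simpl. now rewrite hv, hw. Qed.

Lemma pvert_vert_inv (z : BC) : gm z = z -> gm (pfst z) = pfst z /\ gm (psnd z) = psnd z.
Proof.
  intro H. apply (f_equal (@proj1_sig _ _)) in H. destruct z as [[v w] h]; simpl in *.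
  now injection H.
Qed.

Lemma prep_typ (v : B) (w : C) (h : rho v = lam w) q b c r :
  gm v = v -> gm w = w -> wpath dag (lam v) q -> wpath (rho w) ddag r ->
  fb_typ dag ddag (prep h q b c r).
Proof. intros; repeat split; auto; now apply pvert_vert. Qed.

Lemma prep_tr (v v' : B) (w : C) (ev : v = v') (h : rho v = lam w) (h' : rho v' = lam w) q b c r :
  prep h q b c r = prep h' q (tr (@BsT Y X B) ev b) c r.
Proof. destruct ev. now rewrite (proof_irrelevance _ h h'). Qed.

Lemma fteq_step (t t' : fbrep B * fbrep C) :
  ft_typ dag star ddag t -> ft_typ dag star ddag t' -> ft_rel dag star ddag t t' ->
  fteq dag star ddag t t'.
Proof. intros; now apply rst_step. Qed.

Ltac solve_ft_typ := split; (split; [|split]); cbn [fst snd rz rq rb rp]; auto; try apply gmV.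
Ltac solve_fb_typ := split; [|split]; cbn [rz rq rb rp]; auto; try apply gmV.
Ltac ft_left :=
  apply fteq_step; [solve_ft_typ|solve_ft_typ|apply ftr_1, fbeq_step; [solve_fb_typ|solve_fb_typ|]].
Ltac ft_right :=
  apply fteq_step; [solve_ft_typ|solve_ft_typ|apply ftr_2, fbeq_step; [solve_fb_typ|solve_fb_typ|]].

Section MovePath.
Variables (v : B) (w : C) (h : rho v = lam w) (hv : gm v = v) (hw : gm w = w).
Variables (q : list (letter Y)) (b : Bs v) (c : Bs w) (r : list (letter W)).
Hypotheses (hq : wpath dag (lam v) q) (hr : wpath (rho w) ddag r).

Lemma ft_move_path p1 p2 q1 q2 :
  wpath (rho v) star p1 -> wpath (rho v) star p2 ->
  wpath star (lam w) q1 -> wpath star (lam w) q2 ->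
  weq (rho v) (lam w) (p1 ++ q1) (p2 ++ q2) ->
  fteq dag star ddag (FBRep v q b p1, FBRep w q1 c r) (FBRep v q b p2, FBRep w q2 c r).
Proof.
  intros hp1 hp2 hq1 hq2 E.
  assert (hL : wpath star star (winv p2 ++ p1))
    by (apply wpath_app with (rho v); auto; now apply wpath_winv).
  assert (hLq : wpath star (lam w) ((winv p2 ++ p1) ++ q1)) by (apply wpath_app with star; auto).
  apply rst_trans with (fb_ract (FBRep v q b p2) (winv p2 ++ p1), FBRep w q1 c r).
  - apply fteq_step; [solve_ft_typ|solve_ft_typ; now apply wpath_app with star|].
    apply ftr_1, fbeq_step; [solve_fb_typ|solve_fb_typ; now apply wpath_app with star|].
    apply fbr_p. simpl. rewrite app_assoc. apply rst_sym.
    apply (weq_app_r (u := rho v) (s := p2 ++ winv p2) (t := [])); auto. eapply weq_inv_r; eauto.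
  - apply rst_trans with (FBRep v q b p2, fb_lact (winv p2 ++ p1) (FBRep w q1 c r)).
    + apply fteq_step; [solve_ft_typ; now apply wpath_app with star|solve_ft_typ|]. now apply ftr_m.
    + ft_right.
      apply fbr_q. simpl. rewrite <- app_assoc.
      eapply rst_trans; [apply weq_app_l with (rho v); [exact E|now apply wpath_winv]|].
      rewrite app_assoc.
      apply (weq_app_r (u := star) (s := winv p2 ++ p2) (t := [])); auto. eapply weq_inv_l; eauto.
Qed.

Lemma ft_change_path p p' :
  wpath (rho v) star p -> wpath (rho v) star p' ->
  fteq dag star ddag (FBRep v q b p, FBRep w (winv p) c r) (FBRep v q b p', FBRep w (winv p') c r).
Proof.
  intros hp hp'. apply ft_move_path; auto; rewrite <- h; auto using wpath_winv.
  eapply rst_trans; [eapply weq_inv_r; eauto|]. apply rst_sym; eapply weq_inv_r; eauto.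
Qed.
End MovePath.

Definition fb_split (s : fbrep BC) : fbrep B * fbrep C :=
  let p := base_path (rho (pfst (rz s))) in
  (FBRep (pfst (rz s)) (rq s) (fst (rb s)) p, FBRep (psnd (rz s)) (winv p) (snd (rb s)) (rp s)).

Lemma fb_split_typ s : fb_typ dag ddag s -> ft_typ dag star ddag (fb_split s).
Proof.
  destruct s as [[[v w] h] q [b c] r]; intros [hz [hq hr]].
  destruct (pvert_vert_inv hz) as [hv hw]; unfold pfst, psnd in *; simpl in *.
  assert (hp : wpath (rho v) star (base_path (rho v)))
    by now apply base_path_spec, (gmorph_vert rho).
  unfold fb_split, pfst, psnd; repeat split; simpl; auto. rewrite <- h. now apply wpath_winv.
Qed.

Lemma fb_split_prep (v : B) (w : C) (h : rho v = lam w) q b c r p :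
  fb_typ dag ddag (prep h q b c r) -> wpath (rho v) star p ->
  fteq dag star ddag (fb_split (prep h q b c r)) (FBRep v q b p, FBRep w (winv p) c r).
Proof.
  intros [hz [hq hr]] hp.
  destruct (pvert_vert_inv hz) as [hv hw]; unfold pfst, psnd in *; simpl in *.
  apply ft_change_path; auto. now apply base_path_spec, (gmorph_vert rho).
Qed.

Lemma fb_split_tensor (v : B) (w : C) (h : rho v = lam w) q r (x x' : Bs (pvert h)) :
  gm v = v -> gm w = w -> wpath dag (lam v) q -> wpath (rho w) ddag r -> beq x x' ->
  fteq dag star ddag (fb_split (FBRep (pvert h) q x r)) (fb_split (FBRep (pvert h) q x' r)).
Proof.
  intros hv hw hq hr. apply (crst_map (f := fun x => fb_split (FBRep (pvert h) q x r)));
    [apply clos_rst_is_equiv|].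
  intros [b c] [b' c'] [[Hb Hc]|[[Hb Hc]|[b0 [k [c0 [-> ->]]]]]].
  - simpl in Hb, Hc. apply (beq_eq hBl) in Hb. subst. apply rst_refl.
  - simpl in Hb, Hc. apply (beq_eq hCl) in Hc. subst. apply rst_refl.
  - unfold fb_split, pfst, psnd; simpl.
    set (P := base_path (rho v)).
    assert (hrv : gm (rho v) = rho v) by now apply (gmorph_vert rho).
    assert (hP : wpath (rho v) star P) by now apply base_path_spec.
    assert (hiP : wpath star (lam w) (winv P)) by (rewrite <- h; now apply wpath_winv).
    assert (hk : wpath star (lam w) (winv P ++ [LG (lam w) (tr (@GrT X) h k)])).
    { apply wpath_app with (lam w); auto. simpl. rewrite <- h. auto. }
    (* [(b k) (x) c ~ b (x) (k c)]: move [k] from the right of [b] through [P P^-1] *)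
    apply rst_trans with (FBRep v q b0 (LG (rho v) k :: P), FBRep w (winv P) c0 r).
    { apply fteq_step; [solve_ft_typ|solve_ft_typ; simpl; auto|].
      apply ftr_1, fbeq_step; [solve_fb_typ|solve_fb_typ; simpl; auto|]. apply fbr_r. }
    apply rst_trans with (FBRep v q b0 P, FBRep w (winv P ++ [LG (lam w) (tr (@GrT X) h k)]) c0 r).
    + apply ft_move_path; simpl; auto.
      rewrite <- (LG_tr h), app_assoc.
      apply rst_trans with [LG (rho v) k].
      * rewrite <- h.
        apply (weq_app_l (u := rho v) (l := [LG (rho v) k]) (s := P ++ winv P) (t := []));
          simpl; auto.
        eapply weq_inv_r; eauto.
      * rewrite <- h.
        apply rst_sym, (weq_app_r (u := rho v) (s := P ++ winv P) (t := [])); simpl; auto.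
        eapply weq_inv_r; eauto.
    + ft_right. apply fbr_l.
Qed.

Section SplitEdge.
Variables (e : B) (e' : C) (hz : rho e = lam e') (q : list (letter Y)) (b : Bs e) (c : Bs e')
  (r : list (letter W)).
Hypotheses (hq : wpath dag (lam (gm e)) q) (hr : wpath (rho (gm e')) ddag r)
  (hq2 : wpath dag (lam (gm (gb e))) (q ++ [LX (lam e)]))
  (hr2 : wpath (rho (gm (gb e'))) ddag (LX (gb (rho e')) :: r)).

Let P1 := base_path (rho (gm e)).
Let P2 := base_path (rho (gm (gb e))).

Lemma base_path_edge_spec : wpath (rho (gm e)) star P1 /\ wpath (rho (gm (gb e))) star P2.
Proof. split; apply base_path_spec; now rewrite gmap_m, gmV. Qed.

Lemma rho_lam_gm : rho (gm e) = lam (gm e').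
Proof. now rewrite !gmap_m, hz. Qed.

Lemma wpath_winv_P1 : wpath star (lam (gm e')) (winv P1).
Proof. rewrite <- rho_lam_gm. apply wpath_winv, base_path_edge_spec. Qed.

Lemma wpath_winv_P1_edge : wpath star (lam (gm (gb e'))) (winv P1 ++ [LX (lam e')]).
Proof.
  apply wpath_app with (lam (gm e')); [exact wpath_winv_P1|].
  simpl. split; [now rewrite gmap_m|]. unfold gp. now rewrite gmap_m, gmap_b.
Qed.

(* The edge [(e, e')] of [B (x)_X C] with [e] a vertex of [B]: only the [C]-component moves. *)
Lemma fb_split_edge_vert : gm e = e -> gm e' <> e' ->
  fteq dag star ddag (FBRep (gm e) q (bm b) P1, FBRep (gm e') (winv P1) (bm c) r)
    (FBRep (gm (gb e)) (q ++ [LX (lam e)]) (bm (bb b)) P2,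
     FBRep (gm (gb e')) (winv P2) (bm (bb c)) (LX (gb (rho e')) :: r)).
Proof.
  intros hev he'. destruct base_path_edge_spec as [hP1 hP2].
  assert (hbe : gb e = e) by now apply gb_vert.
  assert (E : gm (gb e) = gm e) by now rewrite hbe.
  unfold P2 in *. rewrite (FBRep_tr E).
  rewrite (@tr_irr _ (@BsT Y X B) _ _ E (f_equal gm hbe)), <- (bm_tr hbe), (bb_vert hB hBl).
  rewrite E in hP2, hq2 |- *.
  assert (hle : gm (lam e) = lam e) by now apply (gmorph_vert lam).
  assert (hle' : gm (lam e') = lam e') by (rewrite <- hz; now apply (gmorph_vert rho)).
  pose proof wpath_winv_P1 as hiP1. pose proof wpath_winv_P1_edge as hw.
  pose proof (weq_drop_vert (l := winv P1) (r := []) hle' hw) as Hw. rewrite app_nil_r in Hw.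
  pose proof (proj1 (weq_typ Hw) hw) as hw'.
  apply rst_trans with (FBRep (gm e) q (bm b) P1,
    FBRep (gm (gb e')) (winv P1 ++ [LX (lam e')]) (bm (bb c)) (LX (gb (rho e')) :: r)).
  { ft_right. now apply fbr_e. }
  apply rst_trans with (FBRep (gm e) q (bm b) P1,
    FBRep (gm (gb e')) (winv P1) (bm (bb c)) (LX (gb (rho e')) :: r)).
  { ft_right. now apply fbr_q. }
  apply rst_trans with (FBRep (gm e) (q ++ [LX (lam e)]) (bm b) P1,
    FBRep (gm (gb e')) (winv P1) (bm (bb c)) (LX (gb (rho e')) :: r)).
  { ft_left. apply fbr_q.
    pose proof (weq_drop_vert (l := q) (r := []) hle hq2) as H. rewrite app_nil_r in H.
    now apply rst_sym. }
  apply ft_change_path; auto; try apply gmV.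
  now rewrite !gmap_m, gmap_b, hz, (gb_vert hle').
Qed.

(* Both components cross their edges, and the base paths at the two ends differ by [rho e]. *)
Lemma fb_split_edge_edge : gm e <> e ->
  fteq dag star ddag (FBRep (gm e) q (bm b) P1, FBRep (gm e') (winv P1) (bm c) r)
    (FBRep (gm (gb e)) (q ++ [LX (lam e)]) (bm (bb b)) P2,
     FBRep (gm (gb e')) (winv P2) (bm (bb c)) (LX (gb (rho e')) :: r)).
Proof.
  intros he. destruct base_path_edge_spec as [hP1 hP2].
  assert (hre : gm (rho e) <> rho e) by now apply (proj1 hfib).
  assert (he' : gm e' <> e') by (intro H; apply hre; rewrite hz; now apply (gmorph_vert lam)).
  assert (hP1' : wpath (rho (gm (gb e))) star (LX (gb (rho e)) :: P1)).
  { simpl. rewrite gmap_m, gmap_b, gp_gb, <- gmap_m. auto. }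
  assert (h2 : rho (gm (gb e)) = lam (gm (gb e'))) by now rewrite !gmap_m, !gmap_b, hz.
  eapply rst_trans; [|apply rst_sym, (ft_change_path h2 (gmV _) (gmV _) (bm (bb b)) (bm (bb c))
                                   hq2 hr2 hP2 hP1')].
  rewrite winv_cons. cbn [linv].
  replace (LX (gb (gb (rho e)))) with (LX (lam e')) by now rewrite gbK, hz.
  pose proof wpath_winv_P1 as hiP1. pose proof wpath_winv_P1_edge as hw.
  apply rst_trans with (FBRep (gm (gb e)) (q ++ [LX (lam e)]) (bm (bb b)) (LX (gb (rho e)) :: P1),
                        FBRep (gm e') (winv P1) (bm c) r).
  - ft_left. now apply fbr_e.
  - ft_right. now apply fbr_e.
Qed.
End SplitEdge.

Lemma fb_split_edge (z : BC) q (x : Bs z) r :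
  gm z <> z -> fb_typ dag ddag (FBRep (gm z) q (bm x) r) ->
  fb_typ dag ddag (FBRep (gm (gb z)) (q ++ [LX (lam z)]) (bm (bb x)) (LX (gb (rho z)) :: r)) ->
  fteq dag star ddag (fb_split (FBRep (gm z) q (bm x) r))
    (fb_split (FBRep (gm (gb z)) (q ++ [LX (lam z)]) (bm (bb x)) (LX (gb (rho z)) :: r))).
Proof.
  destruct z as [[e e'] hz]; destruct x as [b c]. intros hne [_ [hq hr]] [_ [hq2 hr2]].
  unfold fb_split, pfst, psnd; cbn in *.
  destruct (dec_eq (gm e) e) as [hev|he].
  - apply fb_split_edge_vert; auto.
    intro H. apply hne, sig_eq; simpl. now rewrite hev, H.
  - now apply fb_split_edge_edge.
Qed.

Lemma fb_split_rel s s' : fb_typ dag ddag s -> fb_typ dag ddag s' -> fb_rel dag ddag s s' ->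
  fteq dag star ddag (fb_split s) (fb_split s').
Proof.
  intros Hs Hs' Hr. pose proof (fb_split_typ Hs) as Ts. pose proof (fb_split_typ Hs') as Ts'.
  destruct Hr as [z q q' x r Hq | z q x r r' Hr | z q x x' r Hx | z q g x r | z q x h r
                 | z q x r Hz].
  - apply fteq_step, ftr_1, fbeq_step; try apply Ts; try apply Ts'. now apply fbr_q.
  - apply fteq_step, ftr_2, fbeq_step; try apply Ts; try apply Ts'. now apply fbr_p.
  - destruct z as [[v w] h]. destruct Hs as [hz [hq hr]]. destruct (pvert_vert_inv hz) as [hv hw].
    unfold pfst, psnd in *; simpl in *. now apply (fb_split_tensor (h := h)).
  - apply fteq_step, ftr_1, fbeq_step; try apply Ts; try apply Ts'.
    exact (@fbr_l _ _ B dag star (pfst z) q g (fst x) _).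
  - apply fteq_step, ftr_2, fbeq_step; try apply Ts; try apply Ts'. apply fbr_r.
  - now apply fb_split_edge.
Qed.

Lemma fb_split_fbeq s s' : fbeq dag ddag s s' -> fteq dag star ddag (fb_split s) (fb_split s').
Proof.
  apply crst_map; [apply clos_rst_is_equiv|].
  intros ? ? [Hs [Hs' Hr]]. now apply fb_split_rel.
Qed.

Definition merge_state (w : C) (c : Bs w) (r : list (letter W)) (st : state B) :
  option (fbrep BC) :=
  match dec_eq (rho (sv st)) (lam w) with
  | left h => Some (prep h (sq st) (sb st) c r)
  | right _ => None
  end.

(* The inverse: [(q b p) (x) (p' c r)] goes to [q' (b' (x) c) r] where [q b p p' = q' b'] is
   obtained by pushing [p p'] through [B]; the value is [None] only on ill-typed input. *)
Definition fb_merge (t : fbrep B * fbrep C) : option (fbrep BC) :=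
  merge_state (rb (snd t)) (rp (snd t))
    (state_push (State (rz (fst t)) (rq (fst t)) (rb (fst t))) (rp (fst t) ++ rq (snd t))).

Notation opt_fbeq := (opt_rel (@fbeq Y W BC dag ddag)).

Lemma opt_fbeq_equiv : equivalence _ opt_fbeq.
Proof. apply opt_rel_equiv, clos_rst_is_equiv. Qed.

Lemma merge_state_eq (w : C) (c : Bs w) r (st : state B) (h : rho (sv st) = lam w) :
  merge_state c r st = Some (prep h (sq st) (sb st) c r).
Proof.
  unfold merge_state. destruct (dec_eq (rho (sv st)) (lam w)) as [h'|n]; [|contradiction].
  now rewrite (proof_irrelevance _ h' h).
Qed.

Lemma merge_state_compat (w : C) (c : Bs w) r st st' :
  gm w = w -> wpath (rho w) ddag r -> state_eq dag (lam w) st st' ->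
  opt_fbeq (merge_state c r st) (merge_state c r st').
Proof.
  intros hw hr. apply (crst_map (f := merge_state c r)); [apply opt_fbeq_equiv|].
  intros s t [[hs1 [hs2 hs3]] [[ht1 [ht2 ht3]] m]].
  rewrite (merge_state_eq c r hs2), (merge_state_eq c r ht2). simpl.
  apply fbeq_step; [apply prep_typ; auto..|].
  destruct m as [v q q' b Hq | v q g b]; simpl in *; rewrite (proof_irrelevance _ ht2 hs2).
  - now apply fbr_q.
  - exact (@fbr_l _ _ BC dag ddag (pvert hs2) q g (b, c) r).
Qed.

Lemma fb_merge_rel_l (r1 r1' : fbrep B) (s : fbrep C) :
  fb_typ dag star r1 -> fb_typ dag star r1' -> fb_typ star ddag s -> fb_rel dag star r1 r1' ->
  opt_fbeq (fb_merge (r1, s)) (fb_merge (r1', s)).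
Proof.
  destruct s as [w q2 c r]. intros H1 H1' [hw [hq2 hr]] Hr. cbn [rz rq rb rp] in *.
  unfold fb_merge; cbn [fst snd rz rq rb rp].
  destruct Hr as [z q q' b p Hq | z q b p p' Hp | z q b b' p Hb | z q g b p | z q b h p
                 | z q b p Hz];
    destruct H1 as [hz1 [hq1 hp1]]; destruct H1' as [hz1' [hq1' hp1']]; cbn [rz rq rb rp] in *.
  - apply merge_state_compat; auto. apply (state_push_eq hX hB hBl hfib) with (rho z).
    + apply state_eq_rel; [now apply state_typ_init|]. now constructor.
    + now apply wpath_app with star.
  - apply merge_state_compat; auto.
    apply (state_push_weq hY hX hB hBl hfib) with (rho z); [now apply state_typ_init|].
    now apply weq_app_r with star.
  - rewrite (beq_eq hBl Hb). apply opt_fbeq_equiv.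
  - apply merge_state_compat; auto. apply (state_push_eq hX hB hBl hfib) with (rho z).
    + apply state_eq_rel; [now apply state_typ_init|]. constructor.
    + now apply wpath_app with star.
  - cbn [app]. unfold state_push at 2; cbn [fold_left].
    rewrite (state_step_LG q b h (eq_refl (rho z))). apply opt_fbeq_equiv.
  - cbn [app]. unfold state_push at 2; cbn [fold_left].
    fold (state_push (state_step (State (gm (gb z)) (q ++ [LX (lam z)]) (bm (bb b)))
                        (LX (gb (rho z)))) (p ++ q2)).
    apply merge_state_compat; auto. apply (state_push_eq hX hB hBl hfib) with (rho (gm z)).
    + now apply (state_step_return hX hB hBl hfib).
    + now apply wpath_app with star.
Qed.

Lemma prep_fbr_e (e : B) (z : C) (hre : rho e = lam z) Q (be : Bs e) (c : Bs z) r
  (h1 : rho (gm e) = lam (gm z)) (h2 : rho (gm (gb e)) = lam (gm (gb z))) :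
  gm z <> z -> wpath dag (lam (gm e)) Q -> wpath (rho (gm z)) ddag r ->
  wpath dag (lam (gm (gb e))) (Q ++ [LX (lam e)]) ->
  wpath (rho (gm (gb z))) ddag (LX (gb (rho z)) :: r) ->
  fbeq dag ddag (prep h1 Q (bm be) (bm c) r)
    (prep h2 (Q ++ [LX (lam e)]) (bm (bb be)) (bm (bb c)) (LX (gb (rho z)) :: r)).
Proof.
  intros hz hQ hr hQ2 hr2. set (ze := pvert (B := B) (C := C) hre).
  assert (hze : gm ze <> ze).
  { intro H. apply hz. apply (f_equal (fun x => snd (proj1_sig x))) in H. exact H. }
  rewrite (proof_irrelevance _ h1 (proj2_sig (gm ze))),
          (proof_irrelevance _ h2 (proj2_sig (gm (gb ze)))).
  apply fbeq_step; [apply prep_typ; auto; apply gmV..|].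
  exact (@fbr_e _ _ BC dag ddag ze Q (be, c) r hze).
Qed.

Section MergeEdge.
Variables (z : C) (c : Bs z) (r : list (letter W)).
Hypotheses (hz : gm z <> z) (hr : wpath (rho (gm z)) ddag r)
  (hr2 : wpath (rho (gm (gb z))) ddag (LX (gb (rho z)) :: r)).

Lemma merge_state_edge_vert (v : B) Q (b : Bs v) :
  gm (lam z) = lam z -> gm v = v -> rho v = lam (gm z) -> wpath dag (lam v) Q ->
  opt_fbeq (merge_state (bm c) r (State v Q b))
    (merge_state (bm (bb c)) (LX (gb (rho z)) :: r) (State v Q b)).
Proof.
  intros hlz hv hS hQ.
  assert (hvz : rho v = lam z) by now rewrite hS, gmap_m.
  assert (hS2 : rho v = lam (gm (gb z))) by now rewrite hvz, gmap_m, gmap_b, (gb_vert hlz).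
  assert (hgv : gb v = v) by now apply gb_vert.
  assert (ev2 : gm (gb v) = v) by now rewrite hgv.
  rewrite (merge_state_eq _ _ (st := State v Q b) hS), (merge_state_eq _ _ (st := State v Q b) hS2).
  simpl.
  assert (hlv : gm (lam v) = lam v) by now apply (gmorph_vert lam).
  assert (hQ2 : wpath dag (lam v) (Q ++ [LX (lam v)])).
  { apply wpath_app with (lam v); auto. simpl. split; auto. now rewrite gp_vert. }
  assert (h1 : rho (gm v) = lam (gm z)) by now rewrite hv.
  assert (h2 : rho (gm (gb v)) = lam (gm (gb z))) by now rewrite ev2.
  assert (EA : prep hS Q b (bm c) r = prep h1 Q (bm b) (bm c) r)
    by now rewrite (prep_tr hv h1 hS), (bm_vert hB hBl).
  assert (EB : prep hS2 (Q ++ [LX (lam v)]) b (bm (bb c)) (LX (gb (rho z)) :: r)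
               = prep h2 (Q ++ [LX (lam v)]) (bm (bb b)) (bm (bb c)) (LX (gb (rho z)) :: r)).
  { rewrite (prep_tr ev2 h2 hS2). f_equal.
    rewrite (@tr_irr _ (@BsT Y X B) _ _ ev2 (eq_trans (f_equal gm hgv) hv)), <- tr_trans.
    now rewrite <- (bm_tr hgv), (bb_vert hB hBl), (bm_vert hB hBl). }
  (* the loop [v] of [B] pairs with the edge [z] of [C] into an edge of the product *)
  rewrite EA. eapply rst_trans.
  - apply (prep_fbr_e hvz); auto; [now rewrite hv|now rewrite ev2].
  - rewrite <- EB. apply fbeq_step; [apply prep_typ; auto; apply gmV..|].
    apply fbr_q. pose proof (weq_drop_vert (l := Q) (r := []) hlv hQ2) as H.
    now rewrite app_nil_r in H.
Qed.

Lemma merge_state_edge_cross (v : B) Q (b : Bs v) :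
  gm (lam z) <> lam z -> gm v = v -> rho v = lam (gm z) -> wpath dag (lam v) Q ->
  opt_fbeq (merge_state (bm c) r (State v Q b))
    (merge_state (bm (bb c)) (LX (gb (rho z)) :: r) (state_step (State v Q b) (LX (lam z)))).
Proof.
  intros hlz hv hS hQ.
  assert (hfv : gm (lam z) = rho v) by now rewrite hS, gmap_m.
  destruct (state_step_cross hBl hfib Q b hv hfv hlz) as [[e hre hs g0 be] [Eb ->]].
  unfold fibmap in Eb; simpl in Eb. subst v b. unfold cross; cbn [fe fg fb].
  assert (hS2 : rho (gm (gb e)) = lam (gm (gb z))) by now rewrite !gmap_m, !gmap_b, hre.
  rewrite (merge_state_eq _ _ (st := State (gm e) Q _) hS),
          (merge_state_eq _ _ (st := State (gm (gb e)) _ _) hS2). simpl.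
  assert (T1 : wpath dag (lam (gm e)) (Q ++ [LG (lam (gm e)) g0])).
  { apply wpath_app with (lam (gm e)); auto. simpl. split; auto. now apply (gmorph_vert lam). }
  pose proof (cross_path (FibEl hre eq_refl g0 be) hv) as T2.
  apply rst_trans with (prep hS (Q ++ [LG (lam (gm e)) g0]) (bm be) (bm c) r).
  - apply rst_sym, fbeq_step; [apply prep_typ; auto; apply gmV..|].
    exact (@fbr_l _ _ BC dag ddag (pvert hS) Q g0 (bm be, bm c) r).
  - replace (Q ++ [LG (lam (gm e)) g0; LX (lam e)])
      with ((Q ++ [LG (lam (gm e)) g0]) ++ [LX (lam e)]) by now rewrite <- app_assoc.
    apply (prep_fbr_e hre); auto.
    rewrite <- app_assoc. now apply wpath_app with (lam (gm e)).
Qed.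
End MergeEdge.

Lemma fb_merge_rel_r (r1 : fbrep B) (s s' : fbrep C) :
  fb_typ dag star r1 -> fb_typ star ddag s -> fb_typ star ddag s' -> fb_rel star ddag s s' ->
  opt_fbeq (fb_merge (r1, s)) (fb_merge (r1, s')).
Proof.
  destruct r1 as [v q b p]. intros [hv [hq hp]] Hs Hs' Hr. cbn [rz rq rb rp] in *.
  unfold fb_merge; cbn [fst snd rz rq rb rp].
  pose proof (state_typ_init b hv hq) as T0.
  destruct Hr as [z q2 q2' c r Hq | z q2 c r r' Hr | z q2 c c' r Hc | z q2 g c r | z q2 c h r
                 | z q2 c r Hz];
    destruct Hs as [hz [hq2 hr]]; destruct Hs' as [hz' [hq2' hr']]; cbn [rz rq rb rp] in *.
  - apply merge_state_compat; auto. apply (state_push_weq hY hX hB hBl hfib) with (rho v); auto.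
    now apply weq_app_l with star.
  - pose proof (state_push_typ hBl hfib T0 (wpath_app hp hq2)) as [hv' [hS hQ]].
    rewrite !(merge_state_eq _ _ (st := state_push _ _) hS). simpl.
    apply fbeq_step; [apply prep_typ; auto..|]. now apply fbr_p.
  - rewrite (beq_eq hCl Hc). apply opt_fbeq_equiv.
  - pose proof (state_push_typ hBl hfib T0 (wpath_app hp hq2')) as TS1.
    rewrite app_assoc, (state_push_app (State v q b) (p ++ q2) [LG (lam z) g]).
    destruct (state_push (State v q b) (p ++ q2)) as [v' Q b']. destruct TS1 as [hv' [hS hQ]].
    cbn [sv sq sb] in *. unfold state_push; cbn [fold_left].
    rewrite (state_step_LG Q b' g (eq_sym hS)), !(merge_state_eq _ _ (st := State v' Q _) hS).
    simpl.
    apply fbeq_step; [apply prep_typ; auto..|].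
    (* [g] passes from [C] to [B] through the tensor product over [G_{lam z}] *)
    apply fbr_b, rst_step. right; right.
    exists b', (tr (@GrT X) (eq_sym hS) g), c. split; [reflexivity|].
    simpl. now rewrite tr_trans, tr_id.
  - pose proof (state_push_typ hBl hfib T0 (wpath_app hp hq2)) as [hv' [hS hQ]].
    rewrite !(merge_state_eq _ _ (st := state_push _ _) hS). simpl.
    apply fbeq_step; [apply prep_typ; auto..|].
    exact (@fbr_r _ _ BC dag ddag (pvert hS) _ (sb (state_push (State v q b) (p ++ q2)), c) h r).
  - pose proof (state_push_typ hBl hfib T0 (wpath_app hp hq2)) as TS1.
    rewrite app_assoc, (state_push_app (State v q b) (p ++ q2) [LX (lam z)]).
    destruct (state_push (State v q b) (p ++ q2)) as [v' Q b']. destruct TS1 as [hv' [hS hQ]].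
    cbn [sv sq sb] in *. unfold state_push; cbn [fold_left].
    destruct (dec_eq (gm (lam z)) (lam z)) as [hlz|hlz].
    + rewrite state_step_vert by auto. now apply merge_state_edge_vert.
    + now apply merge_state_edge_cross.
Qed.

Lemma fb_merge_fteq (t t' : fbrep B * fbrep C) :
  fteq dag star ddag t t' -> opt_fbeq (fb_merge t) (fb_merge t').
Proof.
  apply (crst_map (f := fb_merge)); [apply opt_fbeq_equiv|].
  intros ? ? [[Ht1 Ht2] [[Ht1' Ht2'] Hr]].
  destruct Hr as [r1 r1' s H | r1 s s' H | r1 s p Hp]; cbn [fst snd] in *.
  - revert H. apply (crst_map (f := fun r => fb_merge (r, s))); [apply opt_fbeq_equiv|].
    intros a b' [Ha [Hb Hab]]. now apply fb_merge_rel_l.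
  - revert H. apply (crst_map (f := fun s0 => fb_merge (r1, s0))); [apply opt_fbeq_equiv|].
    intros a b' [Ha [Hb Hab]]. now apply fb_merge_rel_r.
  - unfold fb_merge, fb_ract, fb_lact; cbn [fst snd rz rq rb rp].
    rewrite <- app_assoc. apply opt_fbeq_equiv.
Qed.

Lemma fb_merge_split s : fb_typ dag ddag s -> opt_fbeq (fb_merge (fb_split s)) (Some s).
Proof.
  destruct s as [[[v w] h] q [b c] r]. simpl in h. intros [hz [hq hr]].
  destruct (pvert_vert_inv hz) as [hv hw]; unfold pfst, psnd in *; cbn in hv, hw, hq, hr.
  unfold fb_split, fb_merge, pfst, psnd; cbn [fst snd rz rq rb rp proj1_sig].
  assert (hP : wpath (rho v) star (base_path (rho v)))
    by now apply base_path_spec, (gmorph_vert rho).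
  eapply (equiv_trans _ _ opt_fbeq_equiv).
  - apply merge_state_compat; auto.
    apply (state_push_weq hY hX hB hBl hfib (W' := []) (u := rho v)); [now apply state_typ_init|].
    rewrite <- h. eapply weq_inv_r; eauto.
  - cbn. rewrite (@merge_state_eq w c r (State v q b) h). apply rst_refl.
Qed.

Lemma fb_split_inj s s' : fb_typ dag ddag s -> fb_typ dag ddag s' ->
  fteq dag star ddag (fb_split s) (fb_split s') -> fbeq dag ddag s s'.
Proof.
  intros Hs Hs' H.
  destruct opt_fbeq_equiv as [_ Otrans Osym].
  exact (Otrans _ _ _ (Otrans _ _ _ (Osym _ _ (fb_merge_split Hs)) (fb_merge_fteq H))
           (fb_merge_split Hs')).
Qed.

Lemma fb_split_surj t : ft_typ dag star ddag t ->
  exists s, fb_typ dag ddag s /\ fteq dag star ddag (fb_split s) t.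
Proof.
  destruct t as [[v q b p] [w q2 c r]]; intros [[hv [hq hp]] [hw [hq2 hr]]].
  cbn [fst snd rz rq rb rp] in *.
  pose proof (state_typ_init (y0 := dag) b hv hq) as T0.
  pose proof (state_push_typ hBl hfib T0 (wpath_app hp hq2)) as T.
  assert (hiq : wpath (lam w) star (winv q2)) by now apply wpath_winv.
  pose proof (state_push_fbeq hBl hfib T0 (wpath_app hp hq2) hiq) as PC.
  destruct (state_push (State v q b) (p ++ q2)) as [v' Q b']. destruct T as [hv' [hS hQ]].
  cbn [sv sq sb state_rep] in *.
  exists (prep hS Q b' c r). split; [now apply prep_typ|].
  eapply rst_trans; [apply (fb_split_prep (p := winv q2)); [now apply prep_typ|now rewrite hS]|].
  rewrite winv_winv.
  apply fteq_step; [solve_ft_typ; now rewrite hS|solve_ft_typ|].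
  (* [q b p q2 q2^-1 = q' b' q2^-1], and [q2^-1 q2] cancels on the other side *)
  apply ftr_1, rst_sym. eapply rst_trans; [|exact PC].
  apply fbeq_step;
    [solve_fb_typ|solve_fb_typ; now apply wpath_app with (lam w); [apply wpath_app with star|]|].
  apply fbr_p. apply rst_sym. rewrite <- app_assoc.
  eapply rst_trans; [apply weq_app_l with star; [eapply weq_inv_r; exact hq2|exact hp]|].
  rewrite app_nil_r. apply rst_refl.
Qed.
End Composition.

Theorem mainTheorem12 (Y X W : gog) (B : gob Y X) (C : gob X W)
  (hY : gog_valid Y) (hX : gog_valid X) (hW : gog_valid W)
  (hB : gob_valid B) (hC : gob_valid C)
  (hBl : leibniz_gob B) (hCl : leibniz_gob C)
  (hfib : left_fibrant B)
  (dag : Y) (star : X) (ddag : W)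
  (hdag : gm dag = dag) (hstar : gm star = star) (hddag : gm ddag = ddag) :
  exists F : fbrep (gob_prod B C) -> fbrep B * fbrep C,
    (* F maps pi_1(B (x) C, dag, ddag) into
       pi_1(B, dag, star) (x)_{pi_1(X, star)} pi_1(C, star, ddag) *)
    (forall s, fb_typ dag ddag s -> ft_typ dag star ddag (F s)) /\
    (* F is well defined on the quotient *)
    (forall s s', fb_typ dag ddag s -> fb_typ dag ddag s' ->
       fbeq dag ddag s s' -> fteq dag star ddag (F s) (F s')) /\
    (* F is the map  q (b (x) c) r |-> (q b p) (x) (p^-1 c r), for any p *)
    (forall (v : B) (w : C) (h : rho v = lam w) q (b : Bs v) (c : Bs w) r p,
       fb_typ dag ddag (prep h q b c r) ->
       wpath (rho v) star p ->
       fteq dag star ddag (F (prep h q b c r))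
            (FBRep v q b p, FBRep w (winv p) c r)) /\
    (* F is a biset morphism *)
    (forall s q' r', fb_typ dag ddag s -> wpath dag dag q' -> wpath ddag ddag r' ->
       fteq dag star ddag (F (fb_ract (fb_lact q' s) r'))
            (fb_lact q' (fst (F s)), fb_ract (snd (F s)) r')) /\
    (* F is injective on the quotient *)
    (forall s s', fb_typ dag ddag s -> fb_typ dag ddag s' ->
       fteq dag star ddag (F s) (F s') -> fbeq dag ddag s s') /\
    (* F is surjective on the quotient *)
    (forall t, ft_typ dag star ddag t ->
       exists s, fb_typ dag ddag s /\ fteq dag star ddag (F s) t).
Proof.
  exists (fb_split star).
  split; [|split; [|split; [|split; [|split]]]].
  - intros s Hs. exact (fb_split_typ hX hstar Hs).
  - intros s s' _ _. exact (fb_split_fbeq hX hB hBl hCl hfib hstar (s := s) (s' := s')).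
  - intros v w h q b c r p Hs Hp. exact (fb_split_prep hX hstar Hs Hp).
  - intros s q' r' _ _ _. apply rst_refl.
  - intros s s' Hs Hs'. exact (fb_split_inj hY hX hB hBl hCl hfib hstar Hs Hs').
  - intros t Ht. exact (fb_split_surj hX hBl hfib hstar Ht).
Qed.
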